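(* Let $0<q<1$, $M\in\mathbb{N}$, $r=q^{-M}$, and let $a,b,c,d,f,g,v,w$ be complex parameters with $\max\{|ac|,|ad|,|bc|,|bd|\}<1$. Then \begin{align*} &\int_c^d\frac{\left(\frac{qt}{c},\frac{qt}{d};q\right)_\infty}{(at,bt;q)_\infty}\sum_{k=0}^\infty\frac{\left(r,f,g,\frac{c}{t},\frac{q}{ad};q\right)_k\left(\frac{vw}{rfg}\right)^k}{\left(v,w,\frac{q}{at},q;q\right)_k}\;{}_3\Phi_3\left[\begin{matrix}rq^k,fq^k,gq^k;\\ vq^k,wq^k,0;\end{matrix}\;q;\,\frac{vw}{rfg}\right]{\rm d}_qt\\ &\qquad=\frac{d(1-q)\left(q,\frac{dq}{c},\frac{c}{d},abcd;q\right)_\infty}{(ac,ad,bc,bd;q)_\infty}\;{}_3\Phi_3\left[\begin{matrix}r,f,g;\\ v,w,0;\end{matrix}\;q;\,\frac{vwbc}{rfg}\right]. \end{align*}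
   Context: Throughout $0<q<1$. For complex $\alpha$: $(\alpha;q)_0=1$, $(\alpha;q)_n=\prod_{k=0}^{n-1}(1-\alpha q^k)$, $(\alpha;q)_\infty=\prod_{k=0}^\infty(1-\alpha q^k)$, and $(\alpha_1,\dots,\alpha_m;q)_n=(\alpha_1;q)_n\cdots(\alpha_m;q)_n$ (also for $n=\infty$). ${}_{3}\Phi_{3}\left[\begin{matrix}a_1,a_2,a_3;\\ b_1,b_2,b_3;\end{matrix}\,q;z\right]=\sum_{n=0}^\infty(-1)^nq^{\binom n2}\frac{(a_1,a_2,a_3;q)_n}{(b_1,b_2,b_3;q)_n}\frac{z^n}{(q;q)_n}$ (here $b_3=0$, so $(0;q)_n=1$). The $q$-integral is $\int_0^x F(t)\,{\rm d}_qt=x(1-q)\sum_{n=0}^\infty F(xq^n)q^n$ and $\int_c^dF(t)\,{\rm d}_qt=\int_0^dF(t)\,{\rm d}_qt-\int_0^cF(t)\,{\rm d}_qt$. *)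

From Stdlib Require Import Reals.
From Coquelicot Require Import Coquelicot.

Open Scope C_scope.

Fixpoint qpoch (al : C) (q : R) (n : nat) : C :=
  match n with
  | O => 1
  | S m => qpoch al q m * (1 - al * RtoC (q ^ m))
  end.

(* complex limit of a sequence: limits of real and imaginary parts
   (Coquelicot's total Lim_seq); equals the true limit when it exists *)
Definition Clim (u : nat -> C) : C :=
  (real (Lim_seq (fun n => fst (u n))), real (Lim_seq (fun n => snd (u n)))).

Definition qpoch_inf (al : C) (q : R) : C := Clim (fun n => qpoch al q n).

Fixpoint psum (u : nat -> C) (n : nat) : C :=
  match n with O => 0 | S m => psum u m + u m end.

Definition Cseries (u : nat -> C) : C := Clim (psum u).

Definition qbin2 (q : R) (n : nat) : R := (q ^ (Nat.div (n * (n - 1)) 2))%R.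

Definition Phi33 (a1 a2 a3 b1 b2 b3 : C) (q : R) (z : C) : C :=
  Cseries (fun n =>
    RtoC ((-1) ^ n * qbin2 q n)%R
    * (qpoch a1 q n * qpoch a2 q n * qpoch a3 q n)
    / (qpoch b1 q n * qpoch b2 q n * qpoch b3 q n)
    * Cpow z n / qpoch (RtoC q) q n).

Definition qint0 (F : C -> C) (x : C) (q : R) : C :=
  x * RtoC (1 - q) * Cseries (fun n => F (x * RtoC (q ^ n)) * RtoC (q ^ n)).

Definition qint (F : C -> C) (c d : C) (q : R) : C := qint0 F d q - qint0 F c q.

(* Write w(t) = (qt/c, qt/d;q)_oo / (at, bt;q)_oo.  Its q-integral from c to d is the
   Al-Salam--Verma q-beta integral d(1-q)(q, dq/c, c/d, abcd;q)_oo / (ac, ad, bc, bd;q)_oo.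
   To prove this, note that (t/c, t/d;q)_oo / (at, bt;q)_oo is a q-antiderivative of w(t) times a
   quadratic in t and vanishes at c and d; this gives a first-order recurrence in b -> bq.
   Iterating it and letting b -> 0, then doing the same for a, reduces the integral to a = b = 0.
   That case is read off from a = q/c, b = q/d, where the weight is identically 1.

   Since r = q^(-M), the k-series in the integrand terminates.  Reversing (c/t;q)_k and
   (q/at;q)_k turns its k-th term times w(t) into (ac/q)^k times the weight with (a, c) replaced
   by (a q^(-k), c q^k).  The q-integral of that weight from c equals its q-integral from c q^k,
   so it is again a q-beta integral, proportional to (bc;q)_k.  Finally the sum over k of (bc;q)_k
   times the shifted 3Phi3 collapses to the 3Phi3 at vwbc/(rfg), by a q-binomial convolution. *)

From Stdlib Require Import Reals Lra Lia Psatz Classical FunctionalExtensionality.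
From Coquelicot Require Import Coquelicot.
Open Scope C_scope.

(** * Limits of complex sequences and series *)

Definition is_Clim_seq (u : nat -> C) (l : C) : Prop :=
  is_lim_seq (fun n => Re (u n)) (Re l) /\ is_lim_seq (fun n => Im (u n)) (Im l).

Lemma is_Clim_seq_unique u l : is_Clim_seq u l -> Clim u = l.
Proof.
  intros [Hre Him]. unfold Clim, Re, Im in *.
  rewrite (is_lim_seq_unique _ _ Hre), (is_lim_seq_unique _ _ Him).
  now destruct l.
Qed.

Lemma is_Clim_seq_eq u l1 l2 : is_Clim_seq u l1 -> is_Clim_seq u l2 -> l1 = l2.
Proof.
  intros H1 H2. rewrite <- (is_Clim_seq_unique _ _ H1). now apply is_Clim_seq_unique.
Qed.

Lemma is_Clim_seq_ext_loc u v l N :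
  (forall n, (N <= n)%nat -> u n = v n) -> is_Clim_seq u l -> is_Clim_seq v l.
Proof.
  intros E [Hre Him]; split; eapply is_lim_seq_ext_loc; try eassumption;
    exists N; intros n Hn; now rewrite E.
Qed.

Lemma is_Clim_seq_ext u v l : (forall n, u n = v n) -> is_Clim_seq u l -> is_Clim_seq v l.
Proof. intros E. apply (is_Clim_seq_ext_loc u v l 0). auto. Qed.

Lemma is_Clim_seq_incr_n u N l :
  is_Clim_seq u l <-> is_Clim_seq (fun n => u (n + N)%nat) l.
Proof.
  unfold is_Clim_seq. rewrite (is_lim_seq_incr_n (fun n => Re (u n)) N).
  now rewrite (is_lim_seq_incr_n (fun n => Im (u n)) N).
Qed.

Lemma is_Clim_seq_const c : is_Clim_seq (fun _ => c) c.
Proof. split; apply is_lim_seq_const. Qed.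

Lemma is_Clim_seq_plus u v l m :
  is_Clim_seq u l -> is_Clim_seq v m -> is_Clim_seq (fun n => u n + v n) (l + m).
Proof.
  intros [H1 H2] [H3 H4]; split; simpl.
  - exact (is_lim_seq_plus' _ _ _ _ H1 H3).
  - exact (is_lim_seq_plus' _ _ _ _ H2 H4).
Qed.

Lemma is_Clim_seq_opp u l : is_Clim_seq u l -> is_Clim_seq (fun n => - u n) (- l).
Proof.
  intros [H1 H2]; split; simpl.
  - exact (proj1 (is_lim_seq_opp _ _) H1).
  - exact (proj1 (is_lim_seq_opp _ _) H2).
Qed.

Lemma is_Clim_seq_minus u v l m :
  is_Clim_seq u l -> is_Clim_seq v m -> is_Clim_seq (fun n => u n - v n) (l - m).
Proof. intros H1 H2. apply is_Clim_seq_plus; auto. now apply is_Clim_seq_opp. Qed.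

Lemma is_Clim_seq_mult u v l m :
  is_Clim_seq u l -> is_Clim_seq v m -> is_Clim_seq (fun n => u n * v n) (l * m).
Proof.
  intros [H1 H2] [H3 H4]; split; simpl.
  - exact (is_lim_seq_minus' _ _ _ _ (is_lim_seq_mult' _ _ _ _ H1 H3) (is_lim_seq_mult' _ _ _ _ H2 H4)).
  - exact (is_lim_seq_plus' _ _ _ _ (is_lim_seq_mult' _ _ _ _ H1 H4) (is_lim_seq_mult' _ _ _ _ H2 H3)).
Qed.

Lemma is_Clim_seq_scal c u l : is_Clim_seq u l -> is_Clim_seq (fun n => c * u n) (c * l).
Proof. intros H. apply is_Clim_seq_mult; auto. apply is_Clim_seq_const. Qed.

Lemma is_Clim_seq_inv u l : is_Clim_seq u l -> l <> 0 -> is_Clim_seq (fun n => / u n) (/ l).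
Proof.
  intros [H1 H2] Hl.
  assert (Hd : (Re l * Re l + Im l * Im l <> 0)%R).
  { intro E. apply Hl. destruct l as [x y]; simpl in *.
    assert (x = 0)%R by nra. assert (y = 0)%R by nra. now subst. }
  assert (HD : is_lim_seq (fun n => Re (u n) * Re (u n) + Im (u n) * Im (u n))%R
                 (Re l * Re l + Im l * Im l)%R)
    by (apply is_lim_seq_plus'; apply is_lim_seq_mult'; assumption).
  split.
  - replace (Re (/ l)) with (Re l / (Re l * Re l + Im l * Im l))%R
      by (destruct l; simpl; rewrite ?Rmult_1_r; reflexivity).
    eapply is_lim_seq_ext; [|apply (is_lim_seq_div' _ _ _ _ H1 HD Hd)].
    intros n; cbv beta; destruct (u n) as [x y]; simpl; rewrite ?Rmult_1_r; reflexivity.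
  - replace (Im (/ l)) with (- Im l / (Re l * Re l + Im l * Im l))%R
      by (destruct l; simpl; rewrite ?Rmult_1_r; reflexivity).
    eapply is_lim_seq_ext; [|apply (is_lim_seq_div' _ _ _ _ (proj1 (is_lim_seq_opp _ _) H2) HD Hd)].
    intros n; cbv beta; destruct (u n) as [x y]; simpl; rewrite ?Rmult_1_r; reflexivity.
Qed.

Lemma is_Clim_seq_div u v l m :
  is_Clim_seq u l -> is_Clim_seq v m -> m <> 0 -> is_Clim_seq (fun n => u n / v n) (l / m).
Proof. intros H1 H2 H3. apply is_Clim_seq_mult; auto. now apply is_Clim_seq_inv. Qed.

Lemma Re_minus x y : Re (x - y) = (Re x - Re y)%R.
Proof. unfold Re; simpl; ring. Qed.

Lemma Im_minus x y : Im (x - y) = (Im x - Im y)%R.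
Proof. unfold Im; simpl; ring. Qed.

Lemma Im_le_Cmod z : (Rabs (Im z) <= Cmod z)%R.
Proof. pose proof (Rmax_Cmod z). pose proof (Rmax_r (Rabs (fst z)) (Rabs (snd z))). unfold Im. lra. Qed.

Lemma Cmod_le_Re_Im z : (Cmod z <= Rabs (Re z) + Rabs (Im z))%R.
Proof.
  destruct z as [x y]. unfold Re, Im; simpl.
  replace (x, y) with (RtoC x + RtoC y * Ci) by (apply injective_projections; simpl; lra).
  eapply Rle_trans; [apply Cmod_triangle|].
  rewrite Cmod_mult, Cmod_Ci, !Cmod_R. lra.
Qed.

Lemma is_Clim_seq_Cmod u l :
  is_Clim_seq u l <->
  forall eps, (0 < eps)%R -> exists N, forall n, (N <= n)%nat -> (Cmod (u n - l) < eps)%R.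
Proof.
  split.
  - intros [H1 H2] eps Heps. apply is_lim_seq_Reals in H1, H2.
    destruct (H1 (eps / 2)%R ltac:(lra)) as [N1 HN1].
    destruct (H2 (eps / 2)%R ltac:(lra)) as [N2 HN2].
    exists (N1 + N2)%nat. intros n Hn.
    specialize (HN1 n ltac:(lia)). specialize (HN2 n ltac:(lia)). unfold R_dist in *.
    pose proof (Cmod_le_Re_Im (u n - l)). rewrite Re_minus in *. rewrite Im_minus in *. lra.
  - intros H; split; apply is_lim_seq_Reals; intros eps Heps;
      destruct (H eps Heps) as [N HN]; exists N; intros n Hn; unfold R_dist;
      specialize (HN n ltac:(lia)).
    + pose proof (re_le_Cmod (u n - l)). rewrite Re_minus in *. lra.
    + pose proof (Im_le_Cmod (u n - l)). rewrite Im_minus in *. lra.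
Qed.

Lemma is_Clim_seq_Cmod_le u l a B :
  is_Clim_seq u l -> (forall n, (Cmod (u n - a) <= B)%R) -> (Cmod (l - a) <= B)%R.
Proof.
  intros H HB. apply Rnot_lt_le. intros Hlt.
  destruct (proj1 (is_Clim_seq_Cmod u l) H (Cmod (l - a) - B)%R ltac:(lra)) as [N HN].
  specialize (HN N (le_n _)). specialize (HB N).
  pose proof (Cmod_triangle (u N - a) (- (u N - l))) as T. rewrite Cmod_opp in T.
  replace (u N - a + - (u N - l)) with (l - a) in T by ring. lra.
Qed.

Lemma pow_le_one q n : (0 <= q <= 1)%R -> (q ^ n <= 1)%R.
Proof. intros Hq. induction n; simpl; [lra|]. pose proof (pow_le q n ltac:(lra)). nra. Qed.

Lemma pow_eventually_le Y q eps : (0 <= q < 1)%R -> (0 < eps)%R ->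
  exists N, forall n, (N <= n)%nat -> (Y * q ^ n <= eps)%R.
Proof.
  intros Hq Heps.
  destruct (pow_lt_1_zero q ltac:(rewrite Rabs_right; lra) (eps / (Rabs Y + 1))%R) as [N HN].
  { apply Rdiv_lt_0_compat; [lra|]. pose proof (Rabs_pos Y); lra. }
  exists N. intros n Hn. specialize (HN n Hn). rewrite Rabs_right in HN by (apply Rle_ge, pow_le; lra).
  pose proof (Rabs_pos Y). pose proof (Rle_abs Y). pose proof (pow_le q n ltac:(lra)).
  apply Rmult_lt_compat_r with (r := (Rabs Y + 1)%R) in HN; [|lra].
  unfold Rdiv in HN. rewrite Rmult_assoc, Rinv_l in HN by lra. nra.
Qed.

Lemma is_Clim_seq_geom u l q C0 N : (0 <= q < 1)%R ->
  (forall n, (N <= n)%nat -> (Cmod (u n - l) <= C0 * q ^ n)%R) -> is_Clim_seq u l.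
Proof.
  intros Hq H. apply is_Clim_seq_Cmod. intros eps Heps.
  destruct (pow_eventually_le C0 q (eps / 2) Hq ltac:(lra)) as [N1 HN1].
  exists (N + N1)%nat. intros n Hn.
  eapply Rle_lt_trans; [apply H; lia|]. specialize (HN1 n ltac:(lia)). lra.
Qed.

Lemma is_Clim_seq_cauchy u :
  (forall eps, (0 < eps)%R -> exists N, forall n m, (N <= n)%nat -> (N <= m)%nat ->
     (Cmod (u m - u n) < eps)%R) ->
  exists l, is_Clim_seq u l.
Proof.
  intros H.
  assert (Hcomp : forall p : C -> R, (forall z w : C, (Rabs (p z - p w) <= Cmod (z - w))%R) ->
            ex_finite_lim_seq (fun n => p (u n))).
  { intros p Hp. apply ex_lim_seq_cauchy_corr. intros eps.
    destruct (H eps (cond_pos eps)) as [N HN]. exists N. intros n m Hn Hm.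
    eapply Rle_lt_trans; [apply Hp|]. now apply HN. }
  destruct (Hcomp Re) as [lr Hr].
  { intros z w. rewrite <- Re_minus. apply re_le_Cmod. }
  destruct (Hcomp Im) as [li Hi].
  { intros z w. rewrite <- Im_minus. apply Im_le_Cmod. }
  now exists (lr, li).
Qed.

Lemma geom_increments_tail u q C0 : (0 <= q < 1)%R ->
  (forall n, (Cmod (u (S n) - u n) <= C0 * q ^ n)%R) ->
  forall n m, (n <= m)%nat -> (Cmod (u m - u n) <= C0 * q ^ n / (1 - q))%R.
Proof.
  intros Hq H n m Hnm.
  assert (HC : (0 <= C0)%R).
  { specialize (H O). pose proof (Cmod_ge_0 (u 1%nat - u O)). simpl in H. lra. }
  assert (Hpart : forall k, (Cmod (u (n + k)%nat - u n) <= C0 * q ^ n * (1 - q ^ k) / (1 - q))%R).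
  { induction k.
    - rewrite Nat.add_0_r. replace (u n - u n) with (RtoC 0) by ring. rewrite Cmod_0.
      simpl. unfold Rdiv. rewrite Rminus_diag. lra.
    - replace (u (n + S k)%nat - u n) with ((u (S (n + k)) - u (n + k)%nat) + (u (n + k)%nat - u n))
        by (rewrite Nat.add_succ_r; ring).
      eapply Rle_trans; [apply Cmod_triangle|].
      specialize (H (n + k)%nat). rewrite pow_add, <- Rmult_assoc in H.
      replace (C0 * q ^ n * (1 - q ^ S k) / (1 - q))%R
        with (C0 * q ^ n * q ^ k + C0 * q ^ n * (1 - q ^ k) / (1 - q))%R by (simpl; field; lra).
      lra. }
  replace m with (n + (m - n))%nat by lia.
  eapply Rle_trans; [apply Hpart|]. unfold Rdiv. apply Rmult_le_compat_r.
  - apply Rlt_le, Rinv_0_lt_compat; lra.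
  - pose proof (pow_le q n ltac:(lra)). pose proof (pow_le q (m - n) ltac:(lra)).
    assert (0 <= C0 * q ^ n * q ^ (m - n))%R by (repeat apply Rmult_le_pos; auto). lra.
Qed.

Lemma is_Clim_seq_geom_increments u q C0 : (0 <= q < 1)%R ->
  (forall n, (Cmod (u (S n) - u n) <= C0 * q ^ n)%R) ->
  exists l, is_Clim_seq u l /\ forall n, (Cmod (u n - l) <= C0 * q ^ n / (1 - q))%R.
Proof.
  intros Hq H. pose proof (geom_increments_tail u q C0 Hq H) as Htail.
  destruct (is_Clim_seq_cauchy u) as [l Hl].
  { intros eps Heps.
    destruct (pow_eventually_le (C0 / (1 - q)) q (eps / 2) Hq ltac:(lra)) as [N HN].
    exists N. intros n m Hn Hm.
    assert (Hb : forall k, (N <= k)%nat -> (C0 * q ^ k / (1 - q) < eps)%R).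
    { intros k Hk. specialize (HN k Hk). unfold Rdiv in *. lra. }
    destruct (Nat.le_ge_cases n m).
    - eapply Rle_lt_trans; [apply Htail; auto|]. now apply Hb.
    - rewrite <- Cmod_opp. replace (- (u m - u n)) with (u n - u m) by ring.
      eapply Rle_lt_trans; [apply Htail; auto|]. now apply Hb. }
  exists l. split; auto. intros n.
  rewrite <- Cmod_opp. replace (- (u n - l)) with (l - u n) by ring.
  apply (is_Clim_seq_Cmod_le (fun m => u (m + n)%nat)).
  - now apply is_Clim_seq_incr_n.
  - intros m. apply Htail. lia.
Qed.

Definition is_Cseries (u : nat -> C) (l : C) : Prop := is_Clim_seq (psum u) l.

Lemma is_Cseries_unique u l : is_Cseries u l -> Cseries u = l.
Proof. apply is_Clim_seq_unique. Qed.

Lemma psum_S u n : psum u (S n) = psum u n + u n.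
Proof. reflexivity. Qed.

Lemma psum_ext u v n : (forall k, (k < n)%nat -> u k = v k) -> psum u n = psum v n.
Proof.
  induction n; intros H; simpl; auto.
  rewrite IHn by (intros; apply H; lia). now rewrite H by lia.
Qed.

Lemma psum_plus u v n : psum (fun k => u k + v k) n = psum u n + psum v n.
Proof. induction n; simpl; [ring|]. rewrite IHn. ring. Qed.

Lemma psum_minus u v n : psum (fun k => u k - v k) n = psum u n - psum v n.
Proof. induction n; simpl; [ring|]. rewrite IHn. ring. Qed.

Lemma psum_scal c u n : psum (fun k => c * u k) n = c * psum u n.
Proof. induction n; simpl; [ring|]. rewrite IHn. ring. Qed.

Lemma psum_zero n : psum (fun _ => 0) n = 0.
Proof. induction n; simpl; [auto|]. rewrite IHn. ring. Qed.

Lemma psum_add u K n : psum u (K + n) = psum u K + psum (fun i => u (K + i)%nat) n.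
Proof. induction n; simpl; [rewrite Nat.add_0_r; ring|]. rewrite Nat.add_succ_r. simpl. rewrite IHn. ring. Qed.

Lemma psum_shift u n : psum u (S n) = u O + psum (fun k => u (S k)) n.
Proof. induction n; simpl in *; [ring|]. rewrite IHn. ring. Qed.

Lemma psum_telescope (g : nat -> C) n : psum (fun k => g k - g (S k)) n = g O - g n.
Proof. induction n; simpl; [ring|]. rewrite IHn. ring. Qed.

Lemma psum_triangle (F : nat -> nat -> C) N :
  psum (fun k => psum (F k) (N - k)) N = psum (fun n => psum (fun k => F k (n - k)%nat) (S n)) N.
Proof.
  induction N; [reflexivity|].
  rewrite (psum_ext _ (fun k => psum (F k) (N - k) + F k (N - k)%nat)).
  - rewrite psum_plus.
    change (psum (fun k => psum (F k) (N - k)) (S N))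
      with (psum (fun k => psum (F k) (N - k)) N + psum (F N) (N - N)).
    rewrite IHN, Nat.sub_diag. simpl. ring.
  - intros k Hk. now replace (S N - k)%nat with (S (N - k)) by lia.
Qed.

Lemma is_Cseries_plus u v l m :
  is_Cseries u l -> is_Cseries v m -> is_Cseries (fun k => u k + v k) (l + m).
Proof.
  intros H1 H2. eapply is_Clim_seq_ext; [|apply (is_Clim_seq_plus _ _ _ _ H1 H2)].
  intros n. now rewrite psum_plus.
Qed.

Lemma is_Cseries_scal c u l : is_Cseries u l -> is_Cseries (fun k => c * u k) (c * l).
Proof.
  intros H. eapply is_Clim_seq_ext; [|apply (is_Clim_seq_scal c _ _ H)].
  intros n. now rewrite psum_scal.
Qed.

Lemma is_Cseries_psum (u : nat -> nat -> C) (L al : nat -> C) N :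
  (forall k, (k < N)%nat -> is_Cseries (u k) (L k)) ->
  is_Cseries (fun n => psum (fun k => al k * u k n) N) (psum (fun k => al k * L k) N).
Proof.
  induction N; intros H.
  - eapply is_Clim_seq_ext; [|apply is_Clim_seq_const]. intros n. symmetry. apply psum_zero.
  - apply is_Cseries_plus; [apply IHN; auto|apply is_Cseries_scal; auto].
Qed.

Lemma is_Cseries_geom_bound u q B : (0 <= q < 1)%R ->
  (forall n, (Cmod (u n) <= B * q ^ n)%R) ->
  exists l, is_Cseries u l /\ (Cmod l <= B / (1 - q))%R.
Proof.
  intros Hq H. destruct (is_Clim_seq_geom_increments (psum u) q B Hq) as [l [Hl Hb]].
  { intros n. simpl. now replace (psum u n + u n - psum u n) with (u n) by ring. }
  exists l. split; auto. specialize (Hb O). simpl in Hb.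
  replace (0 - l) with (- l) in Hb by ring. rewrite Cmod_opp in Hb. lra.
Qed.

Lemma is_Cseries_geom q : (0 <= q < 1)%R -> is_Cseries (fun m => RtoC (q ^ m)) (RtoC (/ (1 - q))).
Proof.
  intros Hq. apply (is_Clim_seq_geom _ _ q (/ (1 - q)) O Hq). intros n _.
  assert (E : psum (fun m => RtoC (q ^ m)) n = RtoC ((1 - q ^ n) / (1 - q))).
  { induction n; simpl psum.
    - f_equal. simpl. field. lra.
    - rewrite IHn, <- RtoC_plus. f_equal. simpl. field. lra. }
  rewrite E, <- RtoC_minus, Cmod_R.
  replace ((1 - q ^ n) / (1 - q) - / (1 - q))%R with (- (q ^ n / (1 - q)))%R by (field; lra).
  rewrite Rabs_Ropp, Rabs_right.
  - right. unfold Rdiv. ring.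
  - apply Rle_ge, Rdiv_le_0_compat; [apply pow_le|]; lra.
Qed.

Lemma Cseries_finite (u : nat -> C) N : (forall k, (N <= k)%nat -> u k = 0) -> Cseries u = psum u N.
Proof.
  intros H. apply is_Cseries_unique.
  apply (is_Clim_seq_ext_loc (fun _ => psum u N) _ _ N); [|apply is_Clim_seq_const].
  intros n Hn. induction Hn; auto. simpl. rewrite <- IHHn, H by lia. ring.
Qed.

(** * q-Pochhammer symbols *)

Lemma RtoC_pow_S q n : RtoC (q ^ S n) = RtoC (q ^ n) * RtoC q.
Proof. rewrite <- RtoC_mult. f_equal. simpl. ring. Qed.

Lemma RtoC_pow_add q n m : RtoC (q ^ (n + m)) = RtoC (q ^ n) * RtoC (q ^ m).
Proof. rewrite <- RtoC_mult. f_equal. apply pow_add. Qed.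

Lemma RtoC_pow_neq0 q k : (0 < q)%R -> RtoC (q ^ k) <> 0.
Proof. intros Hq E. apply RtoC_inj in E. pose proof (pow_lt q k Hq). lra. Qed.

Lemma Cdiv_neq0 (x y : C) : x <> 0 -> y <> 0 -> x / y <> 0.
Proof. intros Hx Hy E. apply Hx. replace x with (x / y * y) by (field; auto). rewrite E. ring. Qed.

Lemma exp_le_exp x y : (x <= y)%R -> (exp x <= exp y)%R.
Proof. intros [H| ->]; [apply Rlt_le, exp_increasing|]; lra. Qed.

Lemma exp_sub1_le s : (0 <= s <= 1/2)%R -> (exp s - 1 <= 2 * s)%R.
Proof.
  intros Hs.
  assert (Hs1 : ((1 - s) * exp s <= 1)%R).
  { pose proof (exp_ineq1_le (- s)). pose proof (exp_pos s).
    assert (E : (exp (- s) * exp s = 1)%R)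
      by (rewrite <- exp_plus, Rplus_opp_l; apply exp_0).
    nra. }
  assert (Hs2 : (exp s <= 2)%R).
  { rewrite <- (exp_ln 2) by lra. apply exp_le_exp. pose proof ln_lt_2. lra. }
  nra.
Qed.

Section QPochhammer.

Variable q : R.

Lemma qpoch_S y n : qpoch y q (S n) = qpoch y q n * (1 - y * RtoC (q ^ n)).
Proof. reflexivity. Qed.

Lemma qpoch_S_l y n : qpoch y q (S n) = (1 - y) * qpoch (y * RtoC q) q n.
Proof.
  induction n.
  - simpl. ring.
  - rewrite qpoch_S, IHn, qpoch_S, RtoC_pow_S. ring.
Qed.

Lemma qpoch_add y k n : qpoch y q (k + n) = qpoch y q k * qpoch (y * RtoC (q ^ k)) q n.
Proof.
  induction n.
  - rewrite Nat.add_0_r. simpl. ring.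
  - rewrite Nat.add_succ_r, qpoch_S, IHn, qpoch_S, RtoC_pow_add. ring.
Qed.

Lemma qpoch_C0 n : qpoch 0 q n = 1.
Proof. induction n; simpl; auto. rewrite IHn. ring. Qed.

Lemma qpoch_eq0 y j n : (j < n)%nat -> y * RtoC (q ^ j) = 1 -> qpoch y q n = 0.
Proof.
  intros Hj E. induction n; [lia|].
  destruct (Nat.eq_dec j n) as [->|Hne].
  - rewrite qpoch_S, E. ring.
  - rewrite qpoch_S, IHn by lia. ring.
Qed.

Lemma qpoch_neq0 y n : (forall j, (j < n)%nat -> y * RtoC (q ^ j) <> 1) -> qpoch y q n <> 0.
Proof.
  induction n; intros H.
  - apply C1_nz.
  - apply Cmult_neq_0.
    + apply IHn. intros; apply H; lia.
    + apply Cminus_eq_contra. intro E. apply (H n); auto.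
Qed.

Definition qregular (y : C) : Prop := forall j, y * RtoC (q ^ j) <> 1.

Lemma qregular_lattice y m : qregular y -> qregular (y * RtoC (q ^ m)).
Proof. intros H j. rewrite <- Cmult_assoc, <- RtoC_pow_add. apply H. Qed.

Lemma qregular_eq y y' : y = y' -> qregular y -> qregular y'.
Proof. now intros ->. Qed.

Lemma qregular_C0 : qregular 0.
Proof. intros j E. rewrite Cmult_0_l in E. apply C1_nz. now rewrite E. Qed.

Lemma qpoch_neq0_qregular y k : qregular y -> qpoch y q k <> 0.
Proof. intros H. apply qpoch_neq0. intros j _. apply H. Qed.

Hypothesis Hq : (0 <= q < 1)%R.

Lemma Cmod_RtoC_pow n : Cmod (RtoC (q ^ n)) = (q ^ n)%R.
Proof. rewrite Cmod_R. apply Rabs_right, Rle_ge, pow_le. lra. Qed.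

Lemma Cmod_mul_pow_le x m : (Cmod (x * RtoC (q ^ m)) <= Cmod x)%R.
Proof.
  rewrite Cmod_mult, Cmod_RtoC_pow. pose proof (Cmod_ge_0 x).
  pose proof (pow_le q m ltac:(lra)). pose proof (pow_le_one q m ltac:(lra)). nra.
Qed.

Lemma qregular_small y : (Cmod y < 1)%R -> qregular y.
Proof. intros Hy j E. pose proof (Cmod_mul_pow_le y j). rewrite E, Cmod_1 in H. lra. Qed.

Lemma qpoch_Cmod_sub1_le y n : (Cmod (qpoch y q n - 1) <= exp (Cmod y / (1 - q)) - 1)%R.
Proof.
  assert (Hpart : (Cmod (qpoch y q n - 1) <= exp (Cmod y * (1 - q ^ n) / (1 - q)) - 1)%R).
  { induction n.
    - simpl. replace (1 - 1) with (RtoC 0) by ring. rewrite Cmod_0.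
      replace (Cmod y * (1 - 1) / (1 - q))%R with 0%R by (field; lra). rewrite exp_0. lra.
    - set (x := (Cmod y * q ^ n)%R).
      set (E := exp (Cmod y * (1 - q ^ n) / (1 - q))) in *.
      assert (Hx : (0 <= x)%R) by (apply Rmult_le_pos; [apply Cmod_ge_0|apply pow_le; lra]).
      assert (HE : (1 <= E)%R).
      { rewrite <- exp_0. apply exp_le_exp. apply Rdiv_le_0_compat; [|lra].
        pose proof (pow_le_one q n ltac:(lra)). pose proof (Cmod_ge_0 y). nra. }
      replace (Cmod y * (1 - q ^ S n) / (1 - q))%R with (Cmod y * (1 - q ^ n) / (1 - q) + x)%R
        by (unfold x; simpl; field; lra).
      rewrite exp_plus. fold E.
      replace (qpoch y q (S n) - 1)
        with ((qpoch y q n - 1) * (1 - y * RtoC (q ^ n)) + - (y * RtoC (q ^ n))) by (simpl; ring).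
      eapply Rle_trans; [apply Cmod_triangle|].
      rewrite Cmod_opp, Cmod_mult, (Cmod_mult y), Cmod_RtoC_pow. fold x.
      assert (H1 : (Cmod (1 - y * RtoC (q ^ n)) <= 1 + x)%R).
      { eapply Rle_trans; [apply Cmod_triangle|].
        rewrite Cmod_opp, Cmod_1, Cmod_mult, Cmod_RtoC_pow. unfold x. lra. }
      pose proof (exp_ineq1_le x).
      pose proof (Cmod_ge_0 (qpoch y q n - 1)). pose proof (Cmod_ge_0 (1 - y * RtoC (q ^ n))).
      nra. }
  eapply Rle_trans; [apply Hpart|]. apply Rplus_le_compat_r, exp_le_exp.
  unfold Rdiv. apply Rmult_le_compat_r; [apply Rlt_le, Rinv_0_lt_compat; lra|].
  pose proof (pow_le q n ltac:(lra)). pose proof (Cmod_ge_0 y). nra.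
Qed.

Lemma qpoch_Cmod_le y n : (Cmod (qpoch y q n) <= exp (Cmod y / (1 - q)))%R.
Proof.
  replace (qpoch y q n) with ((qpoch y q n - 1) + 1) by ring.
  eapply Rle_trans; [apply Cmod_triangle|]. rewrite Cmod_1.
  pose proof (qpoch_Cmod_sub1_le y n). lra.
Qed.

Lemma qpoch_near1 y n : (Cmod y <= (1 - q) / 2)%R ->
  (Cmod (qpoch y q n - 1) <= 2 * Cmod y / (1 - q))%R.
Proof.
  intros Hy. eapply Rle_trans; [apply qpoch_Cmod_sub1_le|].
  replace (2 * Cmod y / (1 - q))%R with (2 * (Cmod y / (1 - q)))%R by (field; lra).
  apply exp_sub1_le. split.
  - apply Rdiv_le_0_compat; [apply Cmod_ge_0|lra].
  - apply (Rmult_le_reg_r (1 - q)); [lra|]. unfold Rdiv. rewrite Rmult_assoc, Rinv_l by lra. lra.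
Qed.

Lemma is_Clim_seq_qpoch y : is_Clim_seq (fun n => qpoch y q n) (qpoch_inf y q).
Proof.
  destruct (is_Clim_seq_geom_increments (fun n => qpoch y q n) q
              (exp (Cmod y / (1 - q)) * Cmod y)%R Hq) as [l [Hl _]].
  - intros n. rewrite qpoch_S.
    replace (qpoch y q n * (1 - y * RtoC (q ^ n)) - qpoch y q n)
      with (- (qpoch y q n * y * RtoC (q ^ n))) by ring.
    rewrite Cmod_opp, !Cmod_mult, Cmod_RtoC_pow.
    apply Rmult_le_compat_r; [apply pow_le; lra|].
    apply Rmult_le_compat_r; [apply Cmod_ge_0|]. apply qpoch_Cmod_le.
  - unfold qpoch_inf. now rewrite (is_Clim_seq_unique _ _ Hl).
Qed.

Lemma qpoch_inf_split y k : qpoch_inf y q = qpoch y q k * qpoch_inf (y * RtoC (q ^ k)) q.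
Proof.
  apply (is_Clim_seq_eq (fun n => qpoch y q (n + k))).
  - apply is_Clim_seq_incr_n, is_Clim_seq_qpoch.
  - eapply is_Clim_seq_ext; [|apply is_Clim_seq_scal, is_Clim_seq_qpoch].
    intros n. simpl. now rewrite Nat.add_comm, qpoch_add.
Qed.

Lemma qpoch_inf_split_eq y y' k : y * RtoC (q ^ k) = y' -> qpoch_inf y q = qpoch y q k * qpoch_inf y' q.
Proof. intros <-. apply qpoch_inf_split. Qed.

Lemma qpoch_inf_split1 y : qpoch_inf y q = (1 - y) * qpoch_inf (y * RtoC q) q.
Proof.
  rewrite (qpoch_inf_split y 1). simpl. rewrite Rmult_1_r. ring.
Qed.

Lemma qpoch_inf_near1 y : (Cmod y <= (1 - q) / 2)%R ->
  (Cmod (qpoch_inf y q - 1) <= 2 * Cmod y / (1 - q))%R.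
Proof.
  intros Hy. apply (is_Clim_seq_Cmod_le (fun n => qpoch y q n)).
  - apply is_Clim_seq_qpoch.
  - intros n. now apply qpoch_near1.
Qed.

Lemma qpoch_inf_Cmod_le y Y : (Cmod y <= Y)%R -> (Cmod (qpoch_inf y q) <= exp (Y / (1 - q)))%R.
Proof.
  intros HY. replace (qpoch_inf y q) with (qpoch_inf y q - 0) by ring.
  apply (is_Clim_seq_Cmod_le (fun n => qpoch y q n)); [apply is_Clim_seq_qpoch|].
  intros n. replace (qpoch y q n - 0) with (qpoch y q n) by ring. eapply Rle_trans; [apply qpoch_Cmod_le|].
  apply exp_le_exp. unfold Rdiv. apply Rmult_le_compat_r; [apply Rlt_le, Rinv_0_lt_compat|]; lra.
Qed.

Lemma qpoch_inf_C0 : qpoch_inf 0 q = 1.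
Proof.
  apply (is_Clim_seq_eq (fun n => qpoch 0 q n)); [apply is_Clim_seq_qpoch|].
  eapply is_Clim_seq_ext; [|apply is_Clim_seq_const]. intros n. now rewrite qpoch_C0.
Qed.

Lemma qpoch_inf_eq0 y j : y * RtoC (q ^ j) = 1 -> qpoch_inf y q = 0.
Proof.
  intros E. rewrite (qpoch_inf_split y (S j)), (qpoch_eq0 y j (S j)); auto. ring.
Qed.

Lemma is_Clim_seq_qpoch_inf_lattice y : is_Clim_seq (fun n => qpoch_inf (y * RtoC (q ^ n)) q) 1.
Proof.
  destruct (pow_eventually_le (Cmod y) q ((1 - q) / 2) Hq ltac:(lra)) as [N HN].
  apply (is_Clim_seq_geom _ _ q (2 * Cmod y / (1 - q)) N Hq).
  intros n Hn. eapply Rle_trans; [apply qpoch_inf_near1|];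
    rewrite Cmod_mult, Cmod_RtoC_pow; [auto|right; field; lra].
Qed.

Lemma Cmod_ge_half z : (Cmod (z - 1) <= 1/2)%R -> (1/2 <= Cmod z)%R.
Proof.
  intros H. pose proof (Cmod_triangle z (-(z - 1))) as T. rewrite Cmod_opp in T.
  replace (z + - (z - 1)) with (RtoC 1) in T by ring. rewrite Cmod_1 in T. lra.
Qed.

Lemma qpoch_inf_Cmod_ge_half y : (Cmod y <= (1 - q) / 4)%R -> (1/2 <= Cmod (qpoch_inf y q))%R.
Proof.
  intros Hy. apply Cmod_ge_half. eapply Rle_trans; [apply qpoch_inf_near1; lra|].
  apply (Rmult_le_reg_r (1 - q)); [lra|]. unfold Rdiv. rewrite Rmult_assoc, Rinv_l by lra. lra.
Qed.

Lemma finite_pos_lower_bound (f : nat -> R) N : (forall m, (m < N)%nat -> (0 < f m)%R) ->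
  exists e, (0 < e)%R /\ forall m, (m < N)%nat -> (e <= f m)%R.
Proof.
  induction N; intros H.
  - exists 1%R. split; [lra|]. intros; lia.
  - destruct IHN as [e [He Hm]]; [intros; apply H; lia|].
    exists (Rmin e (f N)). split; [apply Rmin_glb_lt; auto|].
    intros m Hm'. destruct (Nat.eq_dec m N) as [->|Hne]; [apply Rmin_r|].
    eapply Rle_trans; [apply Rmin_l|]. apply Hm; lia.
Qed.

(* Far out along the lattice the product is close to 1; the finitely many
   remaining points differ from a far one by a nonzero finite product. *)
Lemma qpoch_inf_lattice_Cmod_ge y : qregular y ->
  exists e, (0 < e)%R /\ forall m, (e <= Cmod (qpoch_inf (y * RtoC (q ^ m)) q))%R.
Proof.
  intros H.
  destruct (pow_eventually_le (Cmod y) q ((1 - q) / 4) Hq ltac:(lra)) as [N HN].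
  assert (Hfar : forall m, (N <= m)%nat -> (1/2 <= Cmod (qpoch_inf (y * RtoC (q ^ m)) q))%R).
  { intros m Hm. apply qpoch_inf_Cmod_ge_half. rewrite Cmod_mult, Cmod_RtoC_pow. auto. }
  destruct (finite_pos_lower_bound (fun m => Cmod (qpoch (y * RtoC (q ^ m)) q (N - m)) / 2)%R N)
    as [e [He Hm]].
  { intros m Hm. apply Rdiv_lt_0_compat; [|lra]. apply Cmod_gt_0.
    apply qpoch_neq0_qregular, qregular_lattice, H. }
  exists (Rmin e (1/2)). split; [apply Rmin_glb_lt; lra|].
  intros m. destruct (Nat.lt_ge_cases m N) as [Hlt|Hge].
  - apply Rle_trans with e; [apply Rmin_l|].
    eapply Rle_trans; [apply (Hm m Hlt)|].
    rewrite (qpoch_inf_split _ (N - m)), <- Cmult_assoc, <- RtoC_pow_add, Cmod_mult.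
    replace (m + (N - m))%nat with N by lia.
    pose proof (Hfar N (le_n _)). pose proof (Cmod_ge_0 (qpoch (y * RtoC (q ^ m)) q (N - m))). nra.
  - eapply Rle_trans; [apply Rmin_r|]. now apply Hfar.
Qed.

Lemma qpoch_inf_lattice_neq0 y m : qregular y -> qpoch_inf (y * RtoC (q ^ m)) q <> 0.
Proof.
  intros H E. destruct (qpoch_inf_lattice_Cmod_ge y H) as [e [He Hm]].
  specialize (Hm m). rewrite E, Cmod_0 in Hm. lra.
Qed.

Lemma qpoch_inf_neq0 y : qregular y -> qpoch_inf y q <> 0.
Proof.
  intros H. pose proof (qpoch_inf_lattice_neq0 y 0 H). simpl in H0. now rewrite Cmult_1_r in H0.
Qed.

End QPochhammer.

(** * The Al-Salam--Verma q-beta integral *)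

Definition qweight (q : R) (a b c d t : C) : C :=
  qpoch_inf (RtoC q * t / c) q * qpoch_inf (RtoC q * t / d) q
  / (qpoch_inf (a * t) q * qpoch_inf (b * t) q).

Definition qweight_potential (q : R) (a b c d t : C) : C :=
  qpoch_inf (t / c) q * qpoch_inf (t / d) q / (qpoch_inf (a * t) q * qpoch_inf (b * t) q).

Definition qint_term (F : C -> C) (x : C) (q : R) (n : nat) : C :=
  F (x * RtoC (q ^ n)) * RtoC (q ^ n).

Definition qbeta_integral (q : R) (a b c d : C) : C := qint (qweight q a b c d) c d q.

Definition qbeta_value (q : R) (a b c d : C) : C :=
  d * RtoC (1 - q)
    * (qpoch_inf (RtoC q) q * qpoch_inf (d * RtoC q / c) q
       * qpoch_inf (c / d) q * qpoch_inf (a * b * c * d) q)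
    / (qpoch_inf (a * c) q * qpoch_inf (a * d) q * qpoch_inf (b * c) q * qpoch_inf (b * d) q).

Lemma qweight_comm_ab (q : R) (a b c d : C) : qweight q a b c d = qweight q b a c d.
Proof.
  apply functional_extensionality. intros t. unfold qweight.
  now rewrite (Cmult_comm (qpoch_inf (a * t) q)).
Qed.

Lemma qweight_comm_cd (q : R) (a b c d : C) : qweight q a b c d = qweight q a b d c.
Proof.
  apply functional_extensionality. intros t. unfold qweight.
  now rewrite (Cmult_comm (qpoch_inf (RtoC q * t / c) q)).
Qed.

Lemma qbeta_integral_comm_ab (q : R) (a b c d : C) : qbeta_integral q a b c d = qbeta_integral q b a c d.
Proof. unfold qbeta_integral. now rewrite qweight_comm_ab. Qed.

Lemma qint0_is_Cseries (F : C -> C) (x : C) (q : R) (l : C) : is_Cseries (qint_term F x q) l -> qint0 F x q = x * RtoC (1 - q) * l.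
Proof. intros H. unfold qint0. f_equal. now apply is_Cseries_unique. Qed.

Lemma RtoC_pow_split (q : R) (m k : nat) : (m < k)%nat ->
  RtoC (q ^ k) = RtoC q * RtoC (q ^ m) * RtoC (q ^ (k - 1 - m)).
Proof.
  intros Hm. rewrite <- !RtoC_mult. f_equal. rewrite Rmult_assoc, <- pow_add.
  replace k with (S (m + (k - 1 - m))) at 1 by lia. reflexivity.
Qed.

Section QBeta.

Variable q : R.
Hypothesis Hq : (0 <= q < 1)%R.

Lemma qweight_eq0 (a b c d x : C) (k m : nat) : c <> 0 -> x * RtoC (q ^ k) = c -> (m < k)%nat ->
  qweight q a b c d (x * RtoC (q ^ m)) = 0.
Proof.
  intros Hc Hx Hm. unfold qweight.
  rewrite (qpoch_inf_eq0 q Hq _ (k - 1 - m)); [unfold Cdiv; ring|].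
  replace (RtoC q * (x * RtoC (q ^ m)) / c * RtoC (q ^ (k - 1 - m)))
    with (x * (RtoC q * RtoC (q ^ m) * RtoC (q ^ (k - 1 - m))) / c) by (field; auto).
  rewrite <- (RtoC_pow_split q m k Hm), Hx. field. auto.
Qed.

Lemma qweight_lattice_bounded (a b c d x : C) : qregular q (a * x) -> qregular q (b * x) ->
  exists B, forall m, (Cmod (qweight q a b c d (x * RtoC (q ^ m))) <= B)%R.
Proof.
  intros Ha Hb.
  destruct (qpoch_inf_lattice_Cmod_ge q Hq _ Ha) as [ea [Hea Hma]].
  destruct (qpoch_inf_lattice_Cmod_ge q Hq _ Hb) as [eb [Heb Hmb]].
  set (E1 := exp (Cmod (RtoC q * x / c) / (1 - q))).
  set (E2 := exp (Cmod (RtoC q * x / d) / (1 - q))).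
  exists (E1 * E2 / (ea * eb))%R. intros m. unfold qweight.
  replace (a * (x * RtoC (q ^ m))) with (a * x * RtoC (q ^ m)) by ring.
  replace (b * (x * RtoC (q ^ m))) with (b * x * RtoC (q ^ m)) by ring.
  specialize (Hma m). specialize (Hmb m).
  rewrite Cmod_div by (apply Cmult_neq_0; apply qpoch_inf_lattice_neq0; auto).
  rewrite !Cmod_mult.
  assert (H1 : (Cmod (qpoch_inf (RtoC q * (x * RtoC (q ^ m)) / c) q) <= E1)%R).
  { apply qpoch_inf_Cmod_le; auto.
    replace (RtoC q * (x * RtoC (q ^ m)) / c) with (RtoC q * x / c * RtoC (q ^ m))
      by (unfold Cdiv; ring).
    now apply Cmod_mul_pow_le. }
  assert (H2 : (Cmod (qpoch_inf (RtoC q * (x * RtoC (q ^ m)) / d) q) <= E2)%R).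
  { apply qpoch_inf_Cmod_le; auto.
    replace (RtoC q * (x * RtoC (q ^ m)) / d) with (RtoC q * x / d * RtoC (q ^ m))
      by (unfold Cdiv; ring).
    now apply Cmod_mul_pow_le. }
  unfold Rdiv. apply Rmult_le_compat.
  - apply Rmult_le_pos; apply Cmod_ge_0.
  - apply Rlt_le, Rinv_0_lt_compat, Rmult_lt_0_compat; lra.
  - apply Rmult_le_compat; auto; apply Cmod_ge_0.
  - apply Rinv_le_contravar; [apply Rmult_lt_0_compat; lra|]. apply Rmult_le_compat; lra.
Qed.

Lemma ex_qint_bounded (F : C -> C) (x : C) :
  (exists B, forall m, (Cmod (F (x * RtoC (q ^ m))%C) <= B)%R) ->
  exists l, is_Cseries (qint_term F x q) l.
Proof.
  intros [B HB]. destruct (is_Cseries_geom_bound (qint_term F x q) q B Hq) as [l [Hl _]].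
  - intros n. unfold qint_term. rewrite Cmod_mult, Cmod_RtoC_pow by lra.
    apply Rmult_le_compat_r; auto. apply pow_le; lra.
  - now exists l.
Qed.

Lemma ex_qint_qweight (a b c d x : C) : qregular q (a * x) -> qregular q (b * x) ->
  exists l, is_Cseries (qint_term (qweight q a b c d) x q) l.
Proof. intros Ha Hb. apply ex_qint_bounded. now apply qweight_lattice_bounded. Qed.

Lemma ex_qint_t_qweight (a b c d x : C) : qregular q (a * x) -> qregular q (b * x) ->
  exists l, is_Cseries (qint_term (fun t => t * qweight q a b c d t) x q) l.
Proof.
  intros Ha Hb. apply ex_qint_bounded.
  destruct (qweight_lattice_bounded a b c d x Ha Hb) as [B HB].
  exists (Cmod x * B)%R. intros m. rewrite Cmod_mult.
  apply Rmult_le_compat; try apply Cmod_ge_0; auto. now apply Cmod_mul_pow_le.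
Qed.

Lemma qint0_lattice_shift (F : C -> C) (x : C) (K : nat) :
  (forall m, (m < K)%nat -> F (x * RtoC (q ^ m)) = 0) ->
  (exists l, is_Cseries (qint_term F (x * RtoC (q ^ K)) q) l) ->
  qint0 F x q = qint0 F (x * RtoC (q ^ K)) q.
Proof.
  intros HF [l Hl].
  assert (Hx : is_Cseries (qint_term F x q) (RtoC (q ^ K) * l)).
  { apply (is_Clim_seq_incr_n _ K).
    eapply is_Clim_seq_ext; [|apply (is_Clim_seq_scal (RtoC (q ^ K)) _ _ Hl)].
    intros n. cbv beta. rewrite Nat.add_comm, psum_add, <- psum_scal.
    rewrite (psum_ext (qint_term F x q) (fun _ => 0) K), psum_zero, Cplus_0_l.
    - apply psum_ext. intros i _. unfold qint_term. rewrite RtoC_pow_add.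
      replace (x * (RtoC (q ^ K) * RtoC (q ^ i))) with (x * RtoC (q ^ K) * RtoC (q ^ i)) by ring.
      ring.
    - intros k Hk. unfold qint_term. rewrite HF; auto. ring. }
  rewrite (qint0_is_Cseries _ _ _ _ Hx), (qint0_is_Cseries _ _ _ _ Hl). ring.
Qed.

Lemma qint0_lattice_const1 (F : C -> C) (x : C) : (forall m, F (x * RtoC (q ^ m)) = 1) -> qint0 F x q = x.
Proof.
  intros H1.
  assert (L : is_Cseries (qint_term F x q) (RtoC (/ (1 - q)))).
  { eapply is_Clim_seq_ext; [|apply is_Cseries_geom; auto]. intros n. apply psum_ext.
    intros k _. unfold qint_term. rewrite H1. ring. }
  rewrite (qint0_is_Cseries _ _ _ _ L), <- Cmult_assoc, <- RtoC_mult, Rinv_r by lra. ring.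
Qed.

Lemma qint0_psum (F : C -> C) (G : nat -> C -> C) (al : nat -> C) (x : C) (N : nat) :
  (forall m, F (x * RtoC (q ^ m)) = psum (fun k => al k * G k (x * RtoC (q ^ m))) N) ->
  (forall k, (k < N)%nat -> exists l, is_Cseries (qint_term (G k) x q) l) ->
  qint0 F x q = psum (fun k => al k * qint0 (G k) x q) N.
Proof.
  intros HF HG.
  assert (HG' : forall k, (k < N)%nat -> is_Cseries (qint_term (G k) x q) (Cseries (qint_term (G k) x q))).
  { intros k Hk. destruct (HG k Hk) as [l Hl]. now rewrite (is_Cseries_unique _ _ Hl). }
  assert (L : is_Cseries (qint_term F x q) (psum (fun k => al k * Cseries (qint_term (G k) x q)) N)).
  { eapply is_Clim_seq_ext; [|exact (is_Cseries_psum _ _ al N HG')].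
    intros n. apply psum_ext. intros m _. unfold qint_term. rewrite HF.
    rewrite (Cmult_comm (psum _ N)), <- psum_scal. apply psum_ext. intros; ring. }
  rewrite (qint0_is_Cseries _ _ _ _ L), <- psum_scal. apply psum_ext. intros k _.
  unfold qint0. fold (qint_term (G k) x q). ring.
Qed.

Lemma qint0_qweight_endpoint (a b c d x : C) k : c <> 0 -> x * RtoC (q ^ k) = c ->
  qregular q (a * c) -> qregular q (b * c) ->
  qint0 (qweight q a b c d) x q = qint0 (qweight q a b c d) c q.
Proof.
  intros Hc Hx Ha Hb. rewrite (qint0_lattice_shift _ x k), Hx; auto.
  - intros m Hm. now apply (qweight_eq0 _ _ _ _ _ k).
  - rewrite Hx. now apply ex_qint_qweight.
Qed.

Lemma qweight_potential_sub (a b c d t : C) : c <> 0 -> d <> 0 ->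
  qpoch_inf (a * t * RtoC q) q <> 0 -> qpoch_inf (b * t * RtoC q) q <> 0 ->
  1 - a * t <> 0 -> 1 - b * t <> 0 ->
  qweight_potential q a b c d t - qweight_potential q a b c d (t * RtoC q) =
  qweight q a b c d t * ((a + b - / c - / d) * t + (/ (c * d) - a * b) * t * t).
Proof.
  intros Hc Hd HA HB Ha Hb. unfold qweight_potential, qweight.
  rewrite (qpoch_inf_split1 q Hq (a * t)), (qpoch_inf_split1 q Hq (b * t)).
  rewrite (qpoch_inf_split1 q Hq (t / c)), (qpoch_inf_split1 q Hq (t / d)).
  replace (t / c * RtoC q) with (RtoC q * t / c) by (field; auto).
  replace (t / d * RtoC q) with (RtoC q * t / d) by (field; auto).
  replace (t * RtoC q / c) with (RtoC q * t / c) by (field; auto).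
  replace (t * RtoC q / d) with (RtoC q * t / d) by (field; auto).
  replace (a * (t * RtoC q)) with (a * t * RtoC q) by ring.
  replace (b * (t * RtoC q)) with (b * t * RtoC q) by ring.
  field. repeat split; auto.
Qed.

Lemma qweight_potential_eq0 (a b c d x : C) : c <> 0 -> d <> 0 -> x = c \/ x = d ->
  qweight_potential q a b c d x = 0.
Proof.
  intros Hc Hd Hx. unfold qweight_potential.
  destruct Hx as [-> | ->];
    [rewrite (qpoch_inf_eq0 q Hq (c / c) 0) | rewrite (qpoch_inf_eq0 q Hq (d / d) 0)];
    try (unfold Cdiv; ring); simpl; field; auto.
Qed.

Lemma is_Clim_seq_qweight_potential_lattice (a b c d x : C) : c <> 0 -> d <> 0 ->
  is_Clim_seq (fun n => qweight_potential q a b c d (x * RtoC (q ^ n))) 1.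
Proof.
  intros Hc Hd.
  pose proof (is_Clim_seq_qpoch_inf_lattice q Hq) as L.
  assert (H := is_Clim_seq_div _ _ _ _ (is_Clim_seq_mult _ _ _ _ (L (x / c)) (L (x / d)))
                 (is_Clim_seq_mult _ _ _ _ (L (a * x)) (L (b * x))) ltac:(rewrite Cmult_1_l; apply C1_nz)).
  replace (1 * 1 / (1 * 1)) with (RtoC 1) in H by (field; apply C1_nz).
  eapply is_Clim_seq_ext; [|exact H]. intros n. unfold qweight_potential.
  replace (x / c * RtoC (q ^ n)) with (x * RtoC (q ^ n) / c) by (field; auto).
  replace (x / d * RtoC (q ^ n)) with (x * RtoC (q ^ n) / d) by (field; auto).
  replace (a * x * RtoC (q ^ n)) with (a * (x * RtoC (q ^ n))) by ring.
  now replace (b * x * RtoC (q ^ n)) with (b * (x * RtoC (q ^ n))) by ring.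
Qed.

(* Summing qweight_potential_sub along x q^n telescopes, and the potential tends to 1 at 0. *)
Lemma qint0_qweight_moments (a b c d x : C) : c <> 0 -> d <> 0 ->
  qregular q (a * x) -> qregular q (b * x) ->
  (a + b - / c - / d) * qint0 (qweight q a b c d) x q
  + (/ (c * d) - a * b) * qint0 (fun t => t * qweight q a b c d t) x q
  = RtoC (1 - q) * (qweight_potential q a b c d x - 1).
Proof.
  intros Hc Hd Ha Hb.
  set (P := qweight_potential q a b c d).
  assert (Hstep : forall n, P (x * RtoC (q ^ n)) - P (x * RtoC (q ^ S n)) =
     x * ((a + b - / c - / d) * qint_term (qweight q a b c d) x q n
          + (/ (c * d) - a * b) * qint_term (fun t => t * qweight q a b c d t) x q n)).
  { intros n. unfold P, qint_term.
    replace (x * RtoC (q ^ S n)) with (x * RtoC (q ^ n) * RtoC q) by (rewrite RtoC_pow_S; ring).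
    rewrite qweight_potential_sub; [ring|auto|auto| | | |].
    - replace (a * (x * RtoC (q ^ n)) * RtoC q) with (a * x * RtoC (q ^ S n)) by (rewrite RtoC_pow_S; ring).
      now apply qpoch_inf_lattice_neq0.
    - replace (b * (x * RtoC (q ^ n)) * RtoC q) with (b * x * RtoC (q ^ S n)) by (rewrite RtoC_pow_S; ring).
      now apply qpoch_inf_lattice_neq0.
    - apply Cminus_eq_contra. intro E. apply (Ha n). rewrite E. ring.
    - apply Cminus_eq_contra. intro E. apply (Hb n). rewrite E. ring. }
  assert (Htele : is_Cseries (fun n => P (x * RtoC (q ^ n)) - P (x * RtoC (q ^ S n))) (P x - 1)).
  { eapply is_Clim_seq_ext;
      [|exact (is_Clim_seq_minus _ _ _ _ (is_Clim_seq_const (P x))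
                 (is_Clim_seq_qweight_potential_lattice a b c d x Hc Hd))].
    intros n. cbv beta. rewrite psum_telescope. simpl. now rewrite Cmult_1_r. }
  destruct (ex_qint_qweight a b c d x Ha Hb) as [U HU].
  destruct (ex_qint_t_qweight a b c d x Ha Hb) as [V HV].
  assert (E : x * ((a + b - / c - / d) * U + (/ (c * d) - a * b) * V) = P x - 1).
  { apply (is_Clim_seq_eq _ _ _ (is_Cseries_scal x _ _ (is_Cseries_plus _ _ _ _
             (is_Cseries_scal _ _ _ HU) (is_Cseries_scal _ _ _ HV)))).
    eapply is_Clim_seq_ext; [|exact Htele]. intros n. apply psum_ext. intros k _. now rewrite Hstep. }
  rewrite (qint0_is_Cseries _ _ _ _ HU), (qint0_is_Cseries _ _ _ _ HV), <- E. ring.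
Qed.

Lemma qweight_bq (a b c d t : C) :
  qpoch_inf (a * t) q <> 0 -> qpoch_inf (b * t * RtoC q) q <> 0 -> 1 - b * t <> 0 ->
  qweight q a (b * RtoC q) c d t = qweight q a b c d t * (1 - b * t).
Proof.
  intros HA HB Hb. unfold qweight.
  rewrite (qpoch_inf_split1 q Hq (b * t)).
  replace (b * RtoC q * t) with (b * t * RtoC q) by ring.
  field. repeat split; auto.
Qed.

Lemma qint0_qweight_bq (a b c d x : C) : qregular q (a * x) -> qregular q (b * x) ->
  qint0 (qweight q a (b * RtoC q) c d) x q
  = qint0 (qweight q a b c d) x q - b * qint0 (fun t => t * qweight q a b c d t) x q.
Proof.
  intros Ha Hb.
  destruct (ex_qint_qweight a b c d x Ha Hb) as [U HU].
  destruct (ex_qint_t_qweight a b c d x Ha Hb) as [V HV].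
  assert (L : is_Cseries (qint_term (qweight q a (b * RtoC q) c d) x q) (U + - b * V)).
  { eapply is_Clim_seq_ext; [|exact (is_Cseries_plus _ _ _ _ HU (is_Cseries_scal (- b) _ _ HV))].
    intros n. apply psum_ext. intros k _. unfold qint_term.
    rewrite qweight_bq; [ring| | |].
    - replace (a * (x * RtoC (q ^ k))) with (a * x * RtoC (q ^ k)) by ring.
      now apply qpoch_inf_lattice_neq0.
    - replace (b * (x * RtoC (q ^ k)) * RtoC q) with (b * x * RtoC (q ^ S k)) by (rewrite RtoC_pow_S; ring).
      now apply qpoch_inf_lattice_neq0.
    - apply Cminus_eq_contra. intro E. apply (Hb k). rewrite E. ring. }
  rewrite (qint0_is_Cseries _ _ _ _ HU), (qint0_is_Cseries _ _ _ _ HV), (qint0_is_Cseries _ _ _ _ L).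
  ring.
Qed.

Lemma qbeta_integral_rec (a b c d : C) : c <> 0 -> d <> 0 ->
  qregular q (a * c) -> qregular q (a * d) -> qregular q (b * c) -> qregular q (b * d) ->
  (1 - a * b * c * d) * qbeta_integral q a (b * RtoC q) c d
  = (1 - b * c) * (1 - b * d) * qbeta_integral q a b c d.
Proof.
  intros Hc Hd Hac Had Hbc Hbd. unfold qbeta_integral, qint.
  rewrite !qint0_qweight_bq by auto.
  pose proof (qint0_qweight_moments a b c d c Hc Hd Hac Hbc) as Mc.
  pose proof (qint0_qweight_moments a b c d d Hc Hd Had Hbd) as Md.
  rewrite qweight_potential_eq0 in Mc, Md by auto.
  set (Uc := qint0 (qweight q a b c d) c q) in *.
  set (Ud := qint0 (qweight q a b c d) d q) in *.
  set (Vc := qint0 (fun t => t * qweight q a b c d t) c q) in *.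
  set (Vd := qint0 (fun t => t * qweight q a b c d t) d q) in *.
  assert (E : (a + b - / c - / d) * (Ud - Uc) + (/ (c * d) - a * b) * (Vd - Vc) = 0).
  { transitivity (((a + b - / c - / d) * Ud + (/ (c * d) - a * b) * Vd)
                  - ((a + b - / c - / d) * Uc + (/ (c * d) - a * b) * Vc)); [ring|].
    rewrite Mc, Md. ring. }
  transitivity ((1 - b * c) * (1 - b * d) * (Ud - Uc)
                + (- b * c * d) * ((a + b - / c - / d) * (Ud - Uc) + (/ (c * d) - a * b) * (Vd - Vc))).
  - field. auto.
  - rewrite E. ring.
Qed.

Definition qbeta_normalized (a b c d : C) : C :=
  qbeta_integral q a b c d * qpoch_inf (b * c) q * qpoch_inf (b * d) q.

Lemma qbeta_normalized_iter (a b c d : C) n : c <> 0 -> d <> 0 ->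
  qregular q (a * c) -> qregular q (a * d) -> qregular q (b * c) -> qregular q (b * d) ->
  qbeta_normalized a b c d = qpoch (a * b * c * d) q n * qbeta_normalized a (b * RtoC (q ^ n)) c d.
Proof.
  intros Hc Hd Hac Had Hbc Hbd. induction n.
  - simpl. rewrite Cmult_1_r. ring.
  - rewrite IHn. unfold qbeta_normalized.
    set (b' := b * RtoC (q ^ n)).
    rewrite (qpoch_inf_split1 q Hq (b' * c)), (qpoch_inf_split1 q Hq (b' * d)).
    replace (b * RtoC (q ^ S n)) with (b' * RtoC q) by (unfold b'; rewrite RtoC_pow_S; ring).
    replace (b' * RtoC q * c) with (b' * c * RtoC q) by ring.
    replace (b' * RtoC q * d) with (b' * d * RtoC q) by ring.
    transitivity (qpoch (a * b * c * d) q n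
      * ((1 - b' * c) * (1 - b' * d) * qbeta_integral q a b' c d)
      * qpoch_inf (b' * c * RtoC q) q * qpoch_inf (b' * d * RtoC q) q); [ring|].
    rewrite <- qbeta_integral_rec; auto;
      [|apply (qregular_eq q (b * c * RtoC (q ^ n))); [unfold b'; ring|apply qregular_lattice; auto]
       |apply (qregular_eq q (b * d * RtoC (q ^ n))); [unfold b'; ring|apply qregular_lattice; auto]].
    rewrite qpoch_S. unfold b'. ring.
Qed.

Lemma qweight_b_sub_Cmod_le (a b c d t : C) :
  qpoch_inf (a * t) q <> 0 -> (Cmod (b * t) <= (1 - q) / 4)%R ->
  (Cmod (qweight q a b c d t - qweight q a 0 c d t)
   <= Cmod (qweight q a 0 c d t) * (4 * Cmod (b * t) / (1 - q)))%R.
Proof.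
  intros HA Hbt.
  set (P := qpoch_inf (b * t) q).
  assert (HP1 : (Cmod (P - 1) <= 2 * Cmod (b * t) / (1 - q))%R) by (apply qpoch_inf_near1; auto; lra).
  assert (HP2 : (1/2 <= Cmod P)%R) by (now apply qpoch_inf_Cmod_ge_half).
  assert (HP : P <> 0) by (intro E; rewrite E, Cmod_0 in HP2; lra).
  replace (qweight q a b c d t - qweight q a 0 c d t)
    with (qweight q a 0 c d t * ((1 - P) / P)).
  2:{ unfold qweight. replace (0 * t) with (RtoC 0) by ring. rewrite (qpoch_inf_C0 q Hq).
      fold P. field. auto. }
  rewrite Cmod_mult. apply Rmult_le_compat_l; [apply Cmod_ge_0|].
  rewrite Cmod_div, <- Cmod_opp by auto.
  replace (- (1 - P)) with (P - 1) by ring.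
  apply (Rmult_le_reg_r (Cmod P)); [lra|]. unfold Rdiv at 1. rewrite Rmult_assoc, Rinv_l by lra.
  pose proof (Cmod_ge_0 (b * t)). assert (0 <= 4 * Cmod (b * t) / (1 - q))%R.
  { apply Rdiv_le_0_compat; lra. }
  replace (2 * Cmod (b * t) / (1 - q))%R with (4 * Cmod (b * t) / (1 - q) * (1/2))%R in HP1 by (field; lra).
  nra.
Qed.

Lemma qint_term_qweight_b_sub_Cmod_le (a b c d x : C) W : qregular q (a * x) ->
  (forall m, (Cmod (qweight q a 0 c d (x * RtoC (q ^ m))) <= W)%R) ->
  (Cmod (b * x) <= (1 - q) / 4)%R ->
  forall m, (Cmod (qint_term (qweight q a b c d) x q m + - (1) * qint_term (qweight q a 0 c d) x q m)
             <= W * (4 * Cmod (b * x) / (1 - q)) * q ^ m)%R.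
Proof.
  intros Ha HW Hbx m. unfold qint_term. set (t := x * RtoC (q ^ m)).
  replace (qweight q a b c d t * RtoC (q ^ m) + - (1) * (qweight q a 0 c d t * RtoC (q ^ m)))
    with ((qweight q a b c d t - qweight q a 0 c d t) * RtoC (q ^ m)) by ring.
  rewrite Cmod_mult, Cmod_RtoC_pow by lra. apply Rmult_le_compat_r; [apply pow_le; lra|].
  assert (Hbt : (Cmod (b * t) <= Cmod (b * x))%R).
  { replace (b * t) with (b * x * RtoC (q ^ m)) by (unfold t; ring). now apply Cmod_mul_pow_le. }
  eapply Rle_trans; [apply qweight_b_sub_Cmod_le; [|lra]|].
  - replace (a * t) with (a * x * RtoC (q ^ m)) by (unfold t; ring). now apply qpoch_inf_lattice_neq0.
  - apply Rmult_le_compat; [apply Cmod_ge_0| |apply HW|].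
    + apply Rdiv_le_0_compat; [pose proof (Cmod_ge_0 (b * t))|]; lra.
    + unfold Rdiv. apply Rmult_le_compat_r; [apply Rlt_le, Rinv_0_lt_compat|]; lra.
Qed.

Lemma qint0_qweight_b_lattice (a b c d x : C) : qregular q (a * x) -> qregular q (b * x) ->
  is_Clim_seq (fun n => qint0 (qweight q a (b * RtoC (q ^ n)) c d) x q) (qint0 (qweight q a 0 c d) x q).
Proof.
  intros Ha Hb.
  assert (H0 : qregular q (0 * x)) by (apply (qregular_eq q 0); [ring|apply qregular_C0]).
  destruct (qweight_lattice_bounded a 0 c d x Ha H0) as [W HW].
  assert (HW0 : (0 <= W)%R) by (eapply Rle_trans; [apply Cmod_ge_0|apply (HW O)]).
  destruct (ex_qint_qweight a 0 c d x Ha H0) as [U0 HU0].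
  destruct (pow_eventually_le (Cmod (b * x)) q ((1 - q) / 4) Hq ltac:(lra)) as [N HN].
  apply (is_Clim_seq_geom _ _ q (Cmod x * (W * (4 * Cmod (b * x) / (1 - q))))%R N Hq).
  intros n Hn. set (bn := b * RtoC (q ^ n)).
  assert (Hbnx : bn * x = b * x * RtoC (q ^ n)) by (unfold bn; ring).
  assert (Hbn : qregular q (bn * x)) by (rewrite Hbnx; now apply qregular_lattice).
  destruct (ex_qint_qweight a bn c d x Ha Hbn) as [Un HUn].
  set (Bn := (W * (4 * Cmod (bn * x) / (1 - q)))%R).
  destruct (is_Cseries_geom_bound _ q Bn Hq
              (qint_term_qweight_b_sub_Cmod_le a bn c d x W Ha HW
                 ltac:(rewrite Hbnx, Cmod_mult, Cmod_RtoC_pow; auto))) as [l [Hl Hlb]].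
  assert (El : l = Un + - (1) * U0)
    by (apply (is_Clim_seq_eq _ _ _ Hl), is_Cseries_plus, is_Cseries_scal; auto).
  rewrite (qint0_is_Cseries _ _ _ _ HUn), (qint0_is_Cseries _ _ _ _ HU0).
  replace (x * RtoC (1 - q) * Un - x * RtoC (1 - q) * U0) with (x * RtoC (1 - q) * l) by (rewrite El; ring).
  rewrite !Cmod_mult, Cmod_R, Rabs_right by lra.
  apply Rle_trans with (Cmod x * (1 - q) * (Bn / (1 - q)))%R.
  - apply Rmult_le_compat_l; auto. apply Rmult_le_pos; [apply Cmod_ge_0|lra].
  - right. unfold Bn. rewrite Hbnx, !Cmod_mult, (Cmod_RtoC_pow q Hq). field. lra.
Qed.

Lemma qbeta_integral_b0 (a b c d : C) : c <> 0 -> d <> 0 ->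
  qregular q (a * c) -> qregular q (a * d) -> qregular q (b * c) -> qregular q (b * d) ->
  qbeta_integral q a b c d * qpoch_inf (b * c) q * qpoch_inf (b * d) q
  = qpoch_inf (a * b * c * d) q * qbeta_integral q a 0 c d.
Proof.
  intros Hc Hd Hac Had Hbc Hbd. fold (qbeta_normalized a b c d).
  apply (is_Clim_seq_eq (fun n => qpoch (a * b * c * d) q n * qbeta_normalized a (b * RtoC (q ^ n)) c d)).
  - eapply is_Clim_seq_ext; [|apply is_Clim_seq_const]. intros n.
    cbv beta. apply (qbeta_normalized_iter a b c d n); auto.
  - apply is_Clim_seq_mult; [apply is_Clim_seq_qpoch; auto|].
    pose proof (is_Clim_seq_qpoch_inf_lattice q Hq) as L.
    replace (qbeta_integral q a 0 c d)
      with ((qint0 (qweight q a 0 c d) d q - qint0 (qweight q a 0 c d) c q) * 1 * 1)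
      by (unfold qbeta_integral, qint; ring).
    eapply is_Clim_seq_ext;
      [|exact (is_Clim_seq_mult _ _ _ _ (is_Clim_seq_mult _ _ _ _
                 (is_Clim_seq_minus _ _ _ _ (qint0_qweight_b_lattice a b c d d Had Hbd)
                                           (qint0_qweight_b_lattice a b c d c Hac Hbc))
                 (L (b * c))) (L (b * d)))].
    intros n. unfold qbeta_normalized, qbeta_integral, qint. cbv beta.
    replace (b * RtoC (q ^ n) * c) with (b * c * RtoC (q ^ n)) by ring.
    now replace (b * RtoC (q ^ n) * d) with (b * d * RtoC (q ^ n)) by ring.
Qed.

Lemma qbeta_integral_reduce (a b c d : C) : c <> 0 -> d <> 0 ->
  qregular q (a * c) -> qregular q (a * d) -> qregular q (b * c) -> qregular q (b * d) ->
  qbeta_integral q a b c d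
    * (qpoch_inf (a * c) q * qpoch_inf (a * d) q * qpoch_inf (b * c) q * qpoch_inf (b * d) q)
  = qpoch_inf (a * b * c * d) q * qbeta_integral q 0 0 c d.
Proof.
  intros Hc Hd Hac Had Hbc Hbd.
  assert (H0 : forall y, qregular q (0 * y)) by (intros y; apply (qregular_eq q 0); [ring|apply qregular_C0]).
  transitivity ((qbeta_integral q a b c d * qpoch_inf (b * c) q * qpoch_inf (b * d) q)
                * (qpoch_inf (a * c) q * qpoch_inf (a * d) q)); [ring|].
  rewrite qbeta_integral_b0, qbeta_integral_comm_ab by auto.
  transitivity (qpoch_inf (a * b * c * d) q
                * (qbeta_integral q 0 a c d * qpoch_inf (a * c) q * qpoch_inf (a * d) q)); [ring|].
  rewrite qbeta_integral_b0 by auto.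
  replace (0 * a * c * d) with (RtoC 0) by ring. rewrite (qpoch_inf_C0 q Hq). ring.
Qed.

(* For a = q/c, b = q/d the weight is identically 1 on both lattices. *)
Lemma qbeta_integral_special (c d : C) : c <> 0 -> d <> 0 ->
  qregular q (RtoC q * d / c) -> qregular q (RtoC q * c / d) ->
  qbeta_integral q (RtoC q / c) (RtoC q / d) c d = d - c.
Proof.
  intros Hc Hd Hdc Hcd.
  assert (Hqq : qregular q (RtoC q)) by (apply qregular_small; auto; rewrite Cmod_R, Rabs_right; lra).
  assert (Hw : forall x, qregular q (RtoC q * x / c) -> qregular q (RtoC q * x / d) ->
            forall m, qweight q (RtoC q / c) (RtoC q / d) c d (x * RtoC (q ^ m)) = 1).
  { intros x Hxc Hxd m. unfold qweight.
    replace (RtoC q / c * (x * RtoC (q ^ m))) with (RtoC q * (x * RtoC (q ^ m)) / c) by (field; auto).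
    replace (RtoC q / d * (x * RtoC (q ^ m))) with (RtoC q * (x * RtoC (q ^ m)) / d) by (field; auto).
    field. split.
    - replace (RtoC q * (x * RtoC (q ^ m)) / d) with (RtoC q * x / d * RtoC (q ^ m)) by (field; auto).
      now apply qpoch_inf_lattice_neq0.
    - replace (RtoC q * (x * RtoC (q ^ m)) / c) with (RtoC q * x / c * RtoC (q ^ m)) by (field; auto).
      now apply qpoch_inf_lattice_neq0. }
  unfold qbeta_integral, qint. rewrite !qint0_lattice_const1; auto.
  - apply Hw; auto. apply (qregular_eq q (RtoC q)); auto. field; auto.
  - apply Hw; auto. apply (qregular_eq q (RtoC q)); auto. field; auto.
Qed.

(* When c/d or d/c is a positive power of q the two lattices overlap and both sides vanish. *)
Lemma qbeta_integral_00 (c d : C) : c <> 0 -> d <> 0 ->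
  qbeta_integral q 0 0 c d
  = d * RtoC (1 - q) * (qpoch_inf (RtoC q) q * qpoch_inf (d * RtoC q / c) q * qpoch_inf (c / d) q).
Proof.
  intros Hc Hd.
  assert (H0 : forall y, qregular q (0 * y)) by (intros y; apply (qregular_eq q 0); [ring|apply qregular_C0]).
  destruct (classic (exists j, c * RtoC (q ^ S j) = d)) as [[j Hj]|Hcd].
  { rewrite (qpoch_inf_eq0 q Hq (c / d) (S j)).
    2:{ replace (c / d * RtoC (q ^ S j)) with (c * RtoC (q ^ S j) / d) by (unfold Cdiv; ring).
        rewrite Hj. field. auto. }
    unfold qbeta_integral, qint. rewrite qweight_comm_cd.
    rewrite (qint0_qweight_endpoint 0 0 d c c (S j)); auto. ring. }
  destruct (classic (exists j, d * RtoC (q ^ S j) = c)) as [[j Hj]|Hdc].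
  { rewrite (qpoch_inf_eq0 q Hq (d * RtoC q / c) j).
    2:{ replace (d * RtoC q / c * RtoC (q ^ j)) with (d * RtoC (q ^ S j) / c)
          by (rewrite RtoC_pow_S; unfold Cdiv; ring).
        rewrite Hj. field. auto. }
    unfold qbeta_integral, qint.
    rewrite (qint0_qweight_endpoint 0 0 c d d (S j)); auto. ring. }
  assert (Hreg : forall x y : C, x <> 0 -> ~ (exists j, y * RtoC (q ^ S j) = x) -> qregular q (RtoC q * y / x)).
  { intros x y Hx Hyx j E. apply Hyx. exists j.
    rewrite RtoC_pow_S. replace x with (x * (RtoC q * y / x * RtoC (q ^ j))) by (rewrite E; ring).
    field. auto. }
  assert (Hqq : qregular q (RtoC q)) by (apply qregular_small; auto; rewrite Cmod_R, Rabs_right; lra).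
  pose proof (qbeta_integral_reduce (RtoC q / c) (RtoC q / d) c d Hc Hd) as HJ.
  rewrite qbeta_integral_special in HJ by auto.
  replace (RtoC q / c * c) with (RtoC q) in HJ by (field; auto).
  replace (RtoC q / c * d) with (d * RtoC q / c) in HJ by (field; auto).
  replace (RtoC q / d * c) with (c / d * RtoC q) in HJ by (field; auto).
  replace (RtoC q / d * d) with (RtoC q) in HJ by (field; auto).
  replace (RtoC q / c * (RtoC q / d) * c * d) with (RtoC q * RtoC q) in HJ by (field; auto).
  specialize (HJ Hqq ltac:(apply (qregular_eq q (RtoC q * d / c)); [field; auto|auto])
                 ltac:(apply (qregular_eq q (RtoC q * c / d)); [field; auto|auto]) Hqq).
  assert (HQ2 : qpoch_inf (RtoC q * RtoC q) q <> 0).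
  { apply qpoch_inf_neq0; auto. apply (qregular_small q Hq).
    rewrite <- RtoC_mult, Cmod_R, Rabs_right; nra. }
  rewrite (qpoch_inf_split1 q Hq (RtoC q)), (qpoch_inf_split1 q Hq (c / d)) in *.
  transitivity (qpoch_inf (RtoC q * RtoC q) q * qbeta_integral q 0 0 c d / qpoch_inf (RtoC q * RtoC q) q);
    [field; auto|].
  rewrite <- HJ, RtoC_minus. field. auto.
Qed.

Lemma qbeta_integral_value (a b c d : C) : c <> 0 -> d <> 0 ->
  qregular q (a * c) -> qregular q (a * d) -> qregular q (b * c) -> qregular q (b * d) ->
  qbeta_integral q a b c d = qbeta_value q a b c d.
Proof.
  intros Hc Hd Hac Had Hbc Hbd. pose proof (qbeta_integral_reduce a b c d Hc Hd Hac Had Hbc Hbd) as E.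
  rewrite qbeta_integral_00 in E by auto.
  set (D := qpoch_inf (a * c) q * qpoch_inf (a * d) q * qpoch_inf (b * c) q * qpoch_inf (b * d) q) in *.
  assert (HD : D <> 0) by (unfold D; repeat apply Cmult_neq_0; now apply qpoch_inf_neq0).
  transitivity (qbeta_integral q a b c d * D / D); [field; exact HD|].
  rewrite E. unfold qbeta_value. fold D. field. exact HD.
Qed.

End QBeta.

(** * Expansion of the integrand *)

Section Reversal.

Variable q : R.
Hypothesis Hq : (0 < q < 1)%R.

Let Hq1 : (0 <= q < 1)%R.
Proof. lra. Qed.

Let Hq0 : RtoC q <> 0.
Proof. intros E. apply RtoC_inj in E. lra. Qed.

Let Hqk k : RtoC (q ^ k) <> 0.
Proof. apply RtoC_pow_neq0. lra. Qed.

(* Both factors reversed by (u;q)_k = (-u)^k q^(k(k-1)/2) (q^(1-k)/u;q)_k; the powers of q combine to q^(-k). *)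
Lemma qpoch_reflect (X Y : C) k : X <> 0 -> Y <> 0 ->
  qpoch X q k * qpoch (Y / RtoC (q ^ k)) q k =
  Cpow (X * Y / RtoC q) k * qpoch (RtoC q / (X * RtoC (q ^ k))) q k * qpoch (RtoC q / Y) q k.
Proof.
  intros HX HY. induction k; [simpl; ring|].
  rewrite (qpoch_S q X), (qpoch_S_l q (Y / RtoC (q ^ S k))),
    (qpoch_S_l q (RtoC q / (X * RtoC (q ^ S k)))), (qpoch_S q (RtoC q / Y)).
  replace (Y / RtoC (q ^ S k) * RtoC q) with (Y / RtoC (q ^ k))
    by (rewrite RtoC_pow_S; field; auto).
  replace (RtoC q / (X * RtoC (q ^ S k)) * RtoC q) with (RtoC q / (X * RtoC (q ^ k)))
    by (rewrite RtoC_pow_S; field; auto).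
  transitivity ((qpoch X q k * qpoch (Y / RtoC (q ^ k)) q k)
                * ((1 - X * RtoC (q ^ k)) * (1 - Y / RtoC (q ^ S k)))); [ring|].
  rewrite IHk. simpl Cpow. rewrite RtoC_pow_S. field. auto.
Qed.

Lemma qpoch_div_pow_neq0 (y : C) k : y <> 0 -> qpoch (RtoC q / y) q k <> 0 ->
  qpoch (y / RtoC (q ^ k)) q k <> 0.
Proof.
  intros Hy H. apply qpoch_neq0. intros i Hi E. apply H.
  apply (qpoch_eq0 q _ (k - 1 - i) k); [lia|].
  assert (Hy' : y = RtoC (q ^ k) / RtoC (q ^ i)).
  { transitivity (y / RtoC (q ^ k) * RtoC (q ^ i) * (RtoC (q ^ k) / RtoC (q ^ i))); [field; auto|].
    rewrite E. ring. }
  rewrite Hy', (RtoC_pow_split q i k Hi). field. auto.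
Qed.

Lemma qregular_div_pow (y : C) k : (Cmod y < 1)%R -> (forall K, qpoch (RtoC q / y) q K <> 0) ->
  qregular q (y / RtoC (q ^ k)).
Proof.
  intros Hy H j E.
  assert (Hy0 : y <> 0) by (intro Z; rewrite Z in E; unfold Cdiv in E; rewrite !Cmult_0_l in E; now apply C1_nz).
  destruct (Nat.lt_ge_cases j k) as [Hjk|Hjk].
  - apply (qpoch_div_pow_neq0 y k Hy0 (H k)). now apply (qpoch_eq0 q _ j k).
  - apply (qregular_small q Hq1 y Hy (j - k)%nat).
    rewrite <- E. replace j with (k + (j - k))%nat at 2 by lia. rewrite RtoC_pow_add. field. auto.
Qed.

Lemma qweight_mul_ratio (a b c d t : C) k : a <> 0 -> c <> 0 -> t <> 0 ->
  qpoch (RtoC q / (a * t)) q k <> 0 -> qpoch_inf (a * t) q <> 0 -> qpoch_inf (b * t) q <> 0 ->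
  qweight q a b c d t * (qpoch (c / t) q k / qpoch (RtoC q / (a * t)) q k)
  = Cpow (a * c / RtoC q) k * qweight q (a / RtoC (q ^ k)) b (c * RtoC (q ^ k)) d t.
Proof.
  intros Ha Hc Ht HQ HA HB.
  assert (Hat : a * t <> 0) by (apply Cmult_neq_0; auto).
  assert (HY : qpoch (a * t / RtoC (q ^ k)) q k <> 0) by (apply qpoch_div_pow_neq0; auto).
  pose proof (qpoch_reflect (c / t) (a * t) k (Cdiv_neq0 _ _ Hc Ht) Hat) as R.
  replace (c / t * (a * t) / RtoC q) with (a * c / RtoC q) in R by (field; auto).
  replace (RtoC q / (c / t * RtoC (q ^ k))) with (RtoC q * t / (c * RtoC (q ^ k))) in R by (field; auto).
  unfold qweight.
  rewrite (qpoch_inf_split q Hq1 (RtoC q * t / (c * RtoC (q ^ k))) k).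
  replace (RtoC q * t / (c * RtoC (q ^ k)) * RtoC (q ^ k)) with (RtoC q * t / c) by (field; auto).
  replace (a / RtoC (q ^ k) * t) with (a * t / RtoC (q ^ k)) by (field; auto).
  rewrite (qpoch_inf_split q Hq1 (a * t / RtoC (q ^ k)) k).
  replace (a * t / RtoC (q ^ k) * RtoC (q ^ k)) with (a * t) by (field; auto).
  replace (qpoch (c / t) q k)
    with (Cpow (a * c / RtoC q) k * qpoch (RtoC q * t / (c * RtoC (q ^ k))) q k
          * qpoch (RtoC q / (a * t)) q k / qpoch (a * t / RtoC (q ^ k)) q k)
    by (rewrite <- R; field; auto).
  field. repeat split; auto.
Qed.

Lemma qbeta_integral_shift (a b c d : C) k : a <> 0 -> c <> 0 -> d <> 0 ->
  qregular q (a * c) -> qregular q (a * d) -> qregular q (b * c) -> qregular q (b * d) ->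
  qregular q (a * d / RtoC (q ^ k)) ->
  Cpow (a * c / RtoC q) k * qpoch (RtoC q / (a * d)) q k
    * qbeta_integral q (a / RtoC (q ^ k)) b (c * RtoC (q ^ k)) d
  = qbeta_value q a b c d * qpoch (b * c) q k.
Proof.
  intros Ha Hc Hd Hac Had Hbc Hbd Hadk.
  assert (Hbck : qregular q (b * (c * RtoC (q ^ k))))
    by (apply (qregular_eq q (b * c * RtoC (q ^ k))); [ring|now apply qregular_lattice]).
  rewrite qbeta_integral_value; auto;
    [|apply Cmult_neq_0; auto
     |apply (qregular_eq q (a * c)); [field; auto|auto]
     |apply (qregular_eq q (a * d / RtoC (q ^ k))); [field; auto|auto]].
  unfold qbeta_value.
  replace (a / RtoC (q ^ k) * (c * RtoC (q ^ k))) with (a * c) by (field; auto).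
  replace (a / RtoC (q ^ k) * b * (c * RtoC (q ^ k)) * d) with (a * b * c * d) by (field; auto).
  replace (a / RtoC (q ^ k) * d) with (a * d / RtoC (q ^ k)) by (field; auto).
  rewrite (qpoch_inf_split_eq q Hq1 (a * d / RtoC (q ^ k)) (a * d) k) by (field; auto).
  rewrite (qpoch_inf_split_eq q Hq1 (d * RtoC q / (c * RtoC (q ^ k))) (d * RtoC q / c) k) by (field; auto).
  rewrite (qpoch_inf_split_eq q Hq1 (c / d) (c * RtoC (q ^ k) / d) k) by (field; auto).
  rewrite (qpoch_inf_split_eq q Hq1 (b * c) (b * (c * RtoC (q ^ k))) k) by ring.
  pose proof (qpoch_reflect (c / d) (a * d) k (Cdiv_neq0 _ _ Hc Hd) ltac:(apply Cmult_neq_0; auto)) as R.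
  replace (c / d * (a * d) / RtoC q) with (a * c / RtoC q) in R by (field; auto).
  replace (RtoC q / (c / d * RtoC (q ^ k))) with (d * RtoC q / (c * RtoC (q ^ k))) in R by (field; auto).
  replace (qpoch (c / d) q k)
    with (Cpow (a * c / RtoC q) k * qpoch (d * RtoC q / (c * RtoC (q ^ k))) q k
          * qpoch (RtoC q / (a * d)) q k / qpoch (a * d / RtoC (q ^ k)) q k)
    by (rewrite <- R; field; now apply qpoch_neq0_qregular).
  field. repeat split; auto;
    try (apply qpoch_neq0_qregular; auto); apply qpoch_inf_neq0; auto.
Qed.

End Reversal.

(** * A q-binomial convolution *)

Lemma qbin2_S q j : qbin2 q (S j) = (qbin2 q j * q ^ j)%R.
Proof.
  unfold qbin2. rewrite <- pow_add. f_equal.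
  replace (S j * (S j - 1))%nat with (j * (j - 1) + j * 2)%nat.
  - rewrite Nat.div_add by lia. lia.
  - destruct j; simpl; [reflexivity|]. rewrite Nat.sub_0_r. nia.
Qed.

Section Convolution.

Variable q : R.
Hypothesis Hq : (0 < q < 1)%R.

Definition euler_coef (j : nat) : C := RtoC ((-1) ^ j * qbin2 q j) / qpoch (RtoC q) q j.

Definition qbinom_coef (x : C) (k : nat) : C := qpoch x q k / qpoch (RtoC q) q k.

Definition qconv (x : C) (n : nat) : C := psum (fun k => qbinom_coef x k * euler_coef (n - k)) (S n).

Lemma one_sub_pow_S_neq0 j : 1 - RtoC (q ^ S j) <> 0.
Proof.
  apply Cminus_eq_contra. intro E. apply RtoC_inj in E.
  assert (q ^ S j < 1)%R by (apply pow_lt_1_compat; [lra|lia]). lra.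
Qed.

Lemma qpoch_q_neq0 j : qpoch (RtoC q) q j <> 0.
Proof.
  apply qpoch_neq0. intros i _ E. apply (one_sub_pow_S_neq0 i).
  rewrite RtoC_pow_S, Cmult_comm, E. ring.
Qed.

Lemma euler_coef_S j : euler_coef (S j) * (1 - RtoC (q ^ S j)) = - RtoC (q ^ j) * euler_coef j.
Proof.
  unfold euler_coef. rewrite qpoch_S, qbin2_S.
  assert (H : 1 - RtoC q * RtoC (q ^ j) <> 0)
    by (rewrite Cmult_comm, <- RtoC_pow_S; apply one_sub_pow_S_neq0).
  replace (RtoC ((-1) ^ S j * (qbin2 q j * q ^ j))) with (- RtoC (q ^ j) * RtoC ((-1) ^ j * qbin2 q j))
    by (rewrite <- RtoC_opp, <- RtoC_mult; f_equal; simpl; ring).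
  rewrite RtoC_pow_S. field. split; auto using qpoch_q_neq0.
Qed.

Lemma qbinom_coef_S x k : qbinom_coef x (S k) * (1 - RtoC (q ^ S k)) = (1 - x * RtoC (q ^ k)) * qbinom_coef x k.
Proof.
  unfold qbinom_coef. rewrite !qpoch_S.
  assert (H : 1 - RtoC q * RtoC (q ^ k) <> 0)
    by (rewrite Cmult_comm, <- RtoC_pow_S; apply one_sub_pow_S_neq0).
  rewrite RtoC_pow_S. field. split; auto using qpoch_q_neq0.
Qed.

Lemma qconv_S x n : (1 - RtoC (q ^ S n)) * qconv x (S n) = - x * RtoC (q ^ n) * qconv x n.
Proof.
  unfold qconv. rewrite <- psum_scal.
  rewrite (psum_ext _ (fun k => qbinom_coef x k * euler_coef (S n - k) * (1 - RtoC (q ^ (S n - k))) +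
      qbinom_coef x k * euler_coef (S n - k) * (RtoC (q ^ (S n - k)) * (1 - RtoC (q ^ k))))).
  2:{ intros k Hk. replace (RtoC (q ^ S n)) with (RtoC (q ^ (S n - k)) * RtoC (q ^ k)); [ring|].
      rewrite <- RtoC_pow_add. do 2 f_equal. lia. }
  rewrite psum_plus.
  replace (psum (fun k => qbinom_coef x k * euler_coef (S n - k) * (1 - RtoC (q ^ (S n - k)))) (S (S n)))
    with (psum (fun k => - RtoC (q ^ (n - k)) * (qbinom_coef x k * euler_coef (n - k))) (S n)).
  2:{ rewrite (psum_S _ (S n)), Nat.sub_diag.
      replace (1 - RtoC (q ^ 0)) with (RtoC 0) by (simpl; ring).
      rewrite Cmult_0_r, Cplus_0_r. apply psum_ext. intros k Hk.
      replace (S n - k)%nat with (S (n - k)) by lia.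
      transitivity (qbinom_coef x k * (euler_coef (S (n - k)) * (1 - RtoC (q ^ S (n - k)))));
        [rewrite euler_coef_S; ring|ring]. }
  replace (psum (fun k => qbinom_coef x k * euler_coef (S n - k)
                          * (RtoC (q ^ (S n - k)) * (1 - RtoC (q ^ k)))) (S (S n)))
    with (psum (fun k => (1 - x * RtoC (q ^ k)) * RtoC (q ^ (n - k))
                         * (qbinom_coef x k * euler_coef (n - k))) (S n)).
  2:{ rewrite (psum_shift _ (S n)). replace (1 - RtoC (q ^ 0)) with (RtoC 0) by (simpl; ring).
      rewrite Cmult_0_r, Cmult_0_r, Cplus_0_l. apply psum_ext. intros k Hk.
      replace (S n - S k)%nat with (n - k)%nat by lia.
      transitivity ((qbinom_coef x (S k) * (1 - RtoC (q ^ S k))) * euler_coef (n - k) * RtoC (q ^ (n - k)));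
        [rewrite qbinom_coef_S; ring|ring]. }
  rewrite <- psum_scal, <- psum_plus. apply psum_ext. intros k Hk.
  replace (RtoC (q ^ n)) with (RtoC (q ^ k) * RtoC (q ^ (n - k))); [ring|].
  rewrite <- RtoC_pow_add. do 2 f_equal. lia.
Qed.

(* Coefficients of z^n in (xz;q)_oo = [(xz;q)_oo / (z;q)_oo] (z;q)_oo: the q-binomial theorem
   expands the first factor, Euler's formula the second. *)
Lemma qconv_eq x n : qconv x n = euler_coef n * Cpow x n.
Proof.
  induction n.
  - unfold qconv, qbinom_coef, euler_coef, qbin2. simpl. field.
  - pose proof (one_sub_pow_S_neq0 n) as H.
    transitivity (((1 - RtoC (q ^ S n)) * qconv x (S n)) / (1 - RtoC (q ^ S n))); [field; auto|].
    rewrite qconv_S, IHn.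
    replace (euler_coef (S n)) with (- RtoC (q ^ n) * euler_coef n / (1 - RtoC (q ^ S n)))
      by (rewrite <- euler_coef_S; field; auto).
    simpl Cpow. field. auto.
Qed.

End Convolution.

Definition Phi33_term (a1 a2 a3 b1 b2 b3 : C) (q : R) (z : C) (n : nat) : C :=
  RtoC ((-1) ^ n * qbin2 q n)
  * (qpoch a1 q n * qpoch a2 q n * qpoch a3 q n) / (qpoch b1 q n * qpoch b2 q n * qpoch b3 q n)
  * Cpow z n / qpoch (RtoC q) q n.

Lemma Phi33_terminating (q : R) (M : nat) (r a2 a3 b1 b2 b3 z : C) N :
  r * RtoC (q ^ M) = 1 -> (M < N)%nat ->
  Phi33 r a2 a3 b1 b2 b3 q z = psum (Phi33_term r a2 a3 b1 b2 b3 q z) N.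
Proof.
  intros Hr HN. apply Cseries_finite. intros n Hn. unfold Phi33_term.
  rewrite (qpoch_eq0 q r M n) by (auto; lia). unfold Cdiv. ring.
Qed.

Section TerminatingSeries.

Variables (q : R) (M : nat) (r f g v w z a b c d : C).
Hypothesis Hq : (0 < q < 1)%R.
Hypothesis Hr : r * RtoC (q ^ M) = 1.
Hypothesis Hv : forall k, qpoch v q k <> 0.
Hypothesis Hw : forall k, qpoch w q k <> 0.

Definition series_coef (k : nat) : C :=
  qpoch r q k * qpoch f q k * qpoch g q k * Cpow z k / (qpoch v q k * qpoch w q k * qpoch (RtoC q) q k).

Definition Phi33_shift (k : nat) : C :=
  Phi33 (r * RtoC (q ^ k)) (f * RtoC (q ^ k)) (g * RtoC (q ^ k)) (v * RtoC (q ^ k)) (w * RtoC (q ^ k)) 0 q z.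

Lemma series_coef_Phi33_term (x : C) k m :
  series_coef k * qpoch x q k
  * Phi33_term (r * RtoC (q ^ k)) (f * RtoC (q ^ k)) (g * RtoC (q ^ k))
               (v * RtoC (q ^ k)) (w * RtoC (q ^ k)) 0 q z m
  = qpoch r q (k + m) * qpoch f q (k + m) * qpoch g q (k + m) * Cpow z (k + m)
    / (qpoch v q (k + m) * qpoch w q (k + m)) * (qbinom_coef q x k * euler_coef q m).
Proof.
  unfold series_coef, Phi33_term, qbinom_coef, euler_coef.
  assert (Hvk : qpoch (v * RtoC (q ^ k)) q m <> 0)
    by (intro E; apply (Hv (k + m)%nat); rewrite qpoch_add, E; ring).
  assert (Hwk : qpoch (w * RtoC (q ^ k)) q m <> 0)
    by (intro E; apply (Hw (k + m)%nat); rewrite qpoch_add, E; ring).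
  rewrite !(qpoch_add q _ k m), Cpow_add_r, qpoch_C0.
  field. repeat split; auto; apply qpoch_q_neq0; auto.
Qed.

Lemma Phi33_shift_sum (x : C) :
  psum (fun k => series_coef k * Phi33_shift k * qpoch x q k) (S M) = Phi33 r f g v w 0 q (z * x).
Proof.
  rewrite (Phi33_terminating q M r f g v w 0 (z * x) (S M) Hr ltac:(lia)).
  rewrite (psum_ext _ (fun k => psum (fun m => series_coef k * qpoch x q k
      * Phi33_term (r * RtoC (q ^ k)) (f * RtoC (q ^ k)) (g * RtoC (q ^ k))
                   (v * RtoC (q ^ k)) (w * RtoC (q ^ k)) 0 q z m) (S M - k))).
  2:{ intros k Hk. unfold Phi33_shift.
      rewrite (Phi33_terminating q (M - k) (r * RtoC (q ^ k)) _ _ _ _ _ z (S M - k)).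
      2:{ rewrite <- Cmult_assoc, <- RtoC_pow_add. now replace (k + (M - k))%nat with M by lia. }
      2:{ lia. }
      rewrite <- Cmult_assoc, (Cmult_comm (psum _ _)), Cmult_assoc, <- psum_scal.
      apply psum_ext. intros m _. ring. }
  rewrite psum_triangle. apply psum_ext. intros n Hn.
  rewrite (psum_ext _ (fun k => qpoch r q n * qpoch f q n * qpoch g q n * Cpow z n
                                / (qpoch v q n * qpoch w q n) * (qbinom_coef q x k * euler_coef q (n - k)))).
  2:{ intros k Hk. rewrite series_coef_Phi33_term. now replace (k + (n - k))%nat with n by lia. }
  rewrite psum_scal. fold (qconv q x n). rewrite qconv_eq by auto.
  unfold Phi33_term, euler_coef. rewrite Cpow_mult_l, qpoch_C0. field.
  repeat split; auto; apply qpoch_q_neq0; auto.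
Qed.

Definition integrand (t : C) : C :=
  qweight q a b c d t * Cseries (fun k =>
    qpoch r q k * qpoch f q k * qpoch g q k * qpoch (c / t) q k
      * qpoch (RtoC q / (a * d)) q k * Cpow z k
    / (qpoch v q k * qpoch w q k * qpoch (RtoC q / (a * t)) q k * qpoch (RtoC q) q k)
    * Phi33 (r * RtoC (q ^ k)) (f * RtoC (q ^ k)) (g * RtoC (q ^ k))
            (v * RtoC (q ^ k)) (w * RtoC (q ^ k)) 0 q z).

Definition expansion_coef (k : nat) : C :=
  series_coef k * Phi33_shift k * qpoch (RtoC q / (a * d)) q k * Cpow (a * c / RtoC q) k.

Lemma integrand_expand (t : C) : a <> 0 -> c <> 0 -> t <> 0 ->
  (forall k, qpoch (RtoC q / (a * t)) q k <> 0) ->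
  qpoch_inf (a * t) q <> 0 -> qpoch_inf (b * t) q <> 0 ->
  integrand t
  = psum (fun k => expansion_coef k * qweight q (a / RtoC (q ^ k)) b (c * RtoC (q ^ k)) d t) (S M).
Proof.
  intros Ha Hc Ht HQ HA HB. unfold integrand.
  rewrite (Cseries_finite _ (S M)).
  2:{ intros k Hk. rewrite (qpoch_eq0 q r M k) by (auto; lia). unfold Cdiv. ring. }
  rewrite <- psum_scal. apply psum_ext. intros k _.
  transitivity (series_coef k * Phi33_shift k * qpoch (RtoC q / (a * d)) q k
                * (qweight q a b c d t * (qpoch (c / t) q k / qpoch (RtoC q / (a * t)) q k))).
  - unfold series_coef, Phi33_shift. field. repeat split; auto. now apply qpoch_q_neq0.
  - rewrite qweight_mul_ratio by auto. unfold expansion_coef. ring.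
Qed.

Lemma qint0_integrand (x : C) : a <> 0 -> c <> 0 -> x <> 0 ->
  qregular q (a * x) -> qregular q (b * x) ->
  (forall n k, qpoch (RtoC q / (a * (x * RtoC (q ^ n)))) q k <> 0) ->
  (forall k, qregular q (a * x / RtoC (q ^ k))) ->
  qint0 integrand x q
  = psum (fun k => expansion_coef k * qint0 (qweight q (a / RtoC (q ^ k)) b (c * RtoC (q ^ k)) d) x q) (S M).
Proof.
  intros Ha Hc Hx Hax Hbx HQ Hakx. assert (Hq1 : (0 <= q < 1)%R) by lra.
  apply (qint0_psum q).
  - intros m. apply integrand_expand; auto.
    + apply Cmult_neq_0; auto. apply RtoC_pow_neq0. lra.
    + replace (a * (x * RtoC (q ^ m))) with (a * x * RtoC (q ^ m)) by ring.
      now apply qpoch_inf_lattice_neq0.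
    + replace (b * (x * RtoC (q ^ m))) with (b * x * RtoC (q ^ m)) by ring.
      now apply qpoch_inf_lattice_neq0.
  - intros k _. apply ex_qint_qweight; auto.
    apply (qregular_eq q (a * x / RtoC (q ^ k))); auto. field. apply RtoC_pow_neq0. lra.
Qed.

Lemma expansion_coef_qint k : a <> 0 -> c <> 0 -> d <> 0 ->
  qregular q (a * c) -> qregular q (a * d) -> qregular q (b * c) -> qregular q (b * d) ->
  qregular q (a * d / RtoC (q ^ k)) ->
  expansion_coef k * qint0 (qweight q (a / RtoC (q ^ k)) b (c * RtoC (q ^ k)) d) d q
  - expansion_coef k * qint0 (qweight q (a / RtoC (q ^ k)) b (c * RtoC (q ^ k)) d) c q
  = qbeta_value q a b c d * (series_coef k * Phi33_shift k * qpoch (b * c) q k).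
Proof.
  intros Ha Hc Hd Hac Had Hbc Hbd Hadk. assert (Hq1 : (0 <= q < 1)%R) by lra.
  assert (Hqk : RtoC (q ^ k) <> 0) by (apply RtoC_pow_neq0; lra).
  rewrite (qint0_qweight_endpoint q Hq1 _ _ _ _ c k); auto.
  - transitivity (series_coef k * Phi33_shift k
      * (Cpow (a * c / RtoC q) k * qpoch (RtoC q / (a * d)) q k
         * qbeta_integral q (a / RtoC (q ^ k)) b (c * RtoC (q ^ k)) d));
      [unfold expansion_coef, qbeta_integral, qint; ring|].
    rewrite (qbeta_integral_shift q Hq); auto. ring.
  - apply Cmult_neq_0; auto.
  - apply (qregular_eq q (a * c)); [field; auto|auto].
  - apply (qregular_eq q (b * c * RtoC (q ^ k))); [ring|now apply qregular_lattice].
Qed.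

End TerminatingSeries.

Theorem theorem7 (q : R) (M : nat) (a b c d f g v w : C) :
  (0 < q < 1)%R ->
  (Cmod (a * c) < 1)%R -> (Cmod (a * d) < 1)%R ->
  (Cmod (b * c) < 1)%R -> (Cmod (b * d) < 1)%R ->
  (* non-degeneracy: all expressions in the identity are well defined *)
  a <> 0 -> c <> 0 -> d <> 0 -> f <> 0 -> g <> 0 ->
  (forall k : nat, qpoch v q k <> 0) ->
  (forall k : nat, qpoch w q k <> 0) ->
  (forall n k : nat, qpoch (RtoC q / (a * (c * RtoC (q ^ n)))) q k <> 0) ->
  (forall n k : nat, qpoch (RtoC q / (a * (d * RtoC (q ^ n)))) q k <> 0) ->
  let r : C := RtoC (/ (q ^ M))%R in
  let z : C := v * w / (r * f * g) in
  qint (fun t =>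
      qpoch_inf (RtoC q * t / c) q * qpoch_inf (RtoC q * t / d) q
      / (qpoch_inf (a * t) q * qpoch_inf (b * t) q)
      * Cseries (fun k =>
          qpoch r q k * qpoch f q k * qpoch g q k * qpoch (c / t) q k
            * qpoch (RtoC q / (a * d)) q k * Cpow z k
          / (qpoch v q k * qpoch w q k * qpoch (RtoC q / (a * t)) q k
             * qpoch (RtoC q) q k)
          * Phi33 (r * RtoC (q ^ k)) (f * RtoC (q ^ k)) (g * RtoC (q ^ k))
                  (v * RtoC (q ^ k)) (w * RtoC (q ^ k)) 0 q z))
    c d q
  = d * RtoC (1 - q)
      * (qpoch_inf (RtoC q) q * qpoch_inf (d * RtoC q / c) q
         * qpoch_inf (c / d) q * qpoch_inf (a * b * c * d) q)
      / (qpoch_inf (a * c) q * qpoch_inf (a * d) q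
         * qpoch_inf (b * c) q * qpoch_inf (b * d) q)
      * Phi33 r f g v w 0 q (v * w * b * c / (r * f * g)).
Proof.
  intros Hq Hac Had Hbc Hbd Ha Hc Hd Hf Hg Hv Hw HCc HCd r z.
  change (qint (integrand q r f g v w z a b c d) c d q
          = qbeta_value q a b c d * Phi33 r f g v w 0 q (v * w * b * c / (r * f * g))).
  assert (Hq1 : (0 <= q < 1)%R) by lra.
  assert (Hr : r * RtoC (q ^ M) = 1) by (unfold r; rewrite <- RtoC_mult, Rinv_l; auto; apply pow_nonzero; lra).
  assert (Hr0 : r <> 0) by (intro E; rewrite E, Cmult_0_l in Hr; now apply C1_nz).
  pose proof (qregular_small q Hq1 _ Hac) as Rac. pose proof (qregular_small q Hq1 _ Had) as Rad.
  pose proof (qregular_small q Hq1 _ Hbc) as Rbc. pose proof (qregular_small q Hq1 _ Hbd) as Rbd.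
  assert (Hdiv : forall x, (Cmod (a * x) < 1)%R ->
            (forall n k, qpoch (RtoC q / (a * (x * RtoC (q ^ n)))) q k <> 0) ->
            forall k, qregular q (a * x / RtoC (q ^ k))).
  { intros x Hax HQ k. apply qregular_div_pow; auto.
    intros K. specialize (HQ O K). simpl in HQ. now rewrite Cmult_1_r in HQ. }
  unfold qint. rewrite !(qint0_integrand q M), <- psum_minus; auto.
  rewrite (psum_ext _ (fun k => qbeta_value q a b c d
                                * (series_coef q r f g v w z k * Phi33_shift q r f g v w z k * qpoch (b * c) q k)))
    by (intros k _; apply expansion_coef_qint; auto).
  replace (v * w * b * c / (r * f * g)) with (z * (b * c)) by (unfold z; field; auto).
  now rewrite psum_scal, <- (Phi33_shift_sum q M r f g v w z Hq Hr Hv Hw).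
Qed.
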